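(* Let $\bar n\in\mathbf{N}$ and let ${\bold H}$ be a function with domain $\omega$ whose values ${\bold H}(i)$ are countable sets with at least two elements. Then: (1) the forcing notion $\mathbb{Q}^{\bold H}_{\bar n}$ is $\sigma$-$*$--linked; (2) conditions $p_0,p_1\in\mathbb{Q}^{\bold H}_{\bar n}$ are compatible in $\mathbb{Q}^{\bold H}_{\bar n}$ if and only if $\mathrm{POS}(p_0)\cap\mathrm{POS}(p_1)\neq\emptyset$; (3) $\mathbb{Q}^{\bold H}_{\bar n}$ is a Souslin ccc forcing notion.
   Context: $\mathbf{N}$ is the set of sequences $\bar n=\langle n^0_m,n^1_m:m<\omega\rangle$ of integers with $4<n^0_m\leq n^1_m<n^0_{m+1}$ for all $m$, $2^{2(m^*+2)}\sum_{m<m^*}n^0_m n^1_m<n^0_{m^*}$ for every $m^*\in\omega$, and $\lim_{m\to\infty}(n^1_m)^{1/(2n^0_m)}=\infty$. Conditions of $\mathbb{Q}^{\bold H}_{\bar n}$ are sequences $p=(w^p,\sigma^p_0,\sigma^p_1,\dots)$ of finite functions with pairwise disjoint domains, $w^p(i),\sigma^p_j(i)\in{\bold H}(i)$, such that for some $m^*=m^*(p)<\omega$ there is a partition $\langle V^p_m:m^*\leq m<\omega\rangle$ of $\omega$ with $|V^p_m|\leq n^1_m2^{m^*}$ and $|\mathrm{dom}(\sigma^p_j)|\geq n^0_m/2^{m^*}$ for $j\in V^p_m$. $\mathrm{POS}(p)=\{\eta\in\prod_{i\in\omega}{\bold H}(i): w^p\subseteq\eta,\ \sigma^p_j\not\subseteq\eta\text{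 for all }j\}$, and $p\leq q$ ($q$ stronger) iff $\mathrm{POS}(q)\subseteq\mathrm{POS}(p)$. A forcing notion $\mathbb{Q}$ is $\sigma$-$*$--linked if for every $n\in\omega$ there is a partition $\langle A_i:i\in\omega\rangle$ of $\mathbb{Q}$ such that any $q_0,\dots,q_n$ in one $A_i$ have a common upper bound. Conditions are regarded as points of the Polish space of all sequences $(w,\sigma_0,\sigma_1,\dots)$ of finite functions with $w(i),\sigma_j(i)\in{\bold H}(i)$ (product of discrete spaces); a forcing notion is Souslin if the set of conditions, the order relation and the incompatibility relation are $\Sigma^1_1$ subsets of this space and of its square, and Souslin ccc if additionally it satisfies the countable chain condition. *)

From Stdlib Require Import Reals List Arith.
Import ListNotations.

Fixpoint sum_below (f : nat -> nat) (k : nat) : nat :=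
  match k with 0 => 0 | S k' => sum_below f k' + f k' end.

(* (n0, n1) encodes nbar = < n^0_m, n^1_m : m < omega > *)
Definition in_N (n0 n1 : nat -> nat) : Prop :=
  (forall m, 4 < n0 m /\ n0 m <= n1 m /\ n1 m < n0 (S m)) /\
  (forall ms, 2 ^ (2 * (ms + 2)) * sum_below (fun m => n0 m * n1 m) ms < n0 ms) /\
  (forall M : R, exists m0, forall m, (m0 <= m)%nat ->
      (M < Rpower (INR (n1 m)) (/ (2 * INR (n0 m))))%R).

Definition finfn (H : nat -> Type) : Type :=
  { f : forall i, option (H i) | exists N, forall i, N <= i -> f i = None }.

Definition ffval {H : nat -> Type} (f : finfn H) : forall i, option (H i) :=
  proj1_sig f.

Definition in_dom {H : nat -> Type} (f : finfn H) (i : nat) : Prop :=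
  ffval f i <> None.

(* A point of the Polish space: the sequence (w, sigma_0, sigma_1, ...),
   coded as x with x 0 = w and x (S j) = sigma_j. *)
Definition point (H : nat -> Type) : Type := nat -> finfn H.

Definition is_cond (n0 n1 : nat -> nat) (H : nat -> Type) (p : point H) : Prop :=
  (forall a b i, a <> b -> in_dom (p a) i -> ~ in_dom (p b) i) /\
  (* m* and the partition <V_m : m* <= m < omega> of omega, coded by
     V j = the unique m with j ∈ V_m *)
  exists (ms : nat) (V : nat -> nat),
    (forall j, ms <= V j) /\
    (forall m, ms <= m -> forall l : list nat, NoDup l ->
        (forall j, In j l -> V j = m) -> length l <= n1 m * 2 ^ ms) /\
    (forall j, exists l : list nat, NoDup l /\
        (forall i, In i l -> in_dom (p (S j)) i) /\
        n0 (V j) <= length l * 2 ^ ms).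

Definition POS {H : nat -> Type} (p : point H) (eta : forall i, H i) : Prop :=
  (forall i a, ffval (p 0) i = Some a -> eta i = a) /\
  (forall j, exists i a, ffval (p (S j)) i = Some a /\ eta i <> a).

(* p <= q (q stronger) iff POS(q) ⊆ POS(p) *)
Definition Qle {H : nat -> Type} (p q : point H) : Prop :=
  forall eta, POS q eta -> POS p eta.

Definition compatible {X : Type} (P : X -> Prop) (le : X -> X -> Prop)
  (p q : X) : Prop :=
  exists r, P r /\ le p r /\ le q r.

Definition sigma_star_linked {X : Type} (P : X -> Prop) (le : X -> X -> Prop)
  : Prop :=
  forall n : nat, exists c : X -> nat,  (* partition <A_i> : A_i = {p | c p = i} *)
    forall q : nat -> X,
      (forall k, k <= n -> P (q k)) ->
      (forall k, k <= n -> c (q k) = c (q 0)) ->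
      exists r, P r /\ forall k, k <= n -> le (q k) r.

Definition ccc {X : Type} (P : X -> Prop) (le : X -> X -> Prop) : Prop :=
  forall A : X -> Prop,
    (forall p, A p -> P p) ->
    (forall p q, A p -> A q -> p <> q -> ~ compatible P le p q) ->
    exists f : nat -> X, forall p, A p -> exists k, f k = p.

(* ---------- Sigma^1_1 subsets of T^omega and of (T^omega)^2, T discrete,
   with the product topology; Sigma^1_1 = projection of a closed subset of
   the product with the Baire space omega^omega. ---------- *)

Definition analytic1 {T : Type} (A : (nat -> T) -> Prop) : Prop :=
  exists C : (nat -> T) -> (nat -> nat) -> Prop,
    (forall x y, ~ C x y -> exists n, forall x' y',
        (forall k, k < n -> x' k = x k /\ y' k = y k) -> ~ C x' y') /\
    (forall x, A x <-> exists y, C x y).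

Definition analytic2 {T : Type} (A : (nat -> T) -> (nat -> T) -> Prop) : Prop :=
  exists C : (nat -> T) -> (nat -> T) -> (nat -> nat) -> Prop,
    (forall x1 x2 y, ~ C x1 x2 y -> exists n, forall x1' x2' y',
        (forall k, k < n -> x1' k = x1 k /\ x2' k = x2 k /\ y' k = y k) ->
        ~ C x1' x2' y') /\
    (forall x1 x2, A x1 x2 <-> exists y, C x1 x2 y).

Definition souslin {T : Type} (P : (nat -> T) -> Prop)
  (le : (nat -> T) -> (nat -> T) -> Prop) : Prop :=
  analytic1 P /\
  analytic2 (fun p q => P p /\ P q /\ le p q) /\
  analytic2 (fun p q => P p /\ P q /\ ~ compatible P le p q).

Definition souslin_ccc {T : Type} (P : (nat -> T) -> Prop)
  (le : (nat -> T) -> (nat -> T) -> Prop) : Prop :=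
  souslin P le /\ ccc P le.

(* Several conditions q_0, ..., q_n are amalgamated around a total function eta0 lying in
   every POS(q_k).  Up to a threshold level eta0 already avoids all the sigmas; above it, a
   sigma of level m has at least n0_m / 2^M0 points, which dwarfs everything of lower level.
   Within one level every point lies in at most n + 1 sigmas (those of one condition are
   disjoint), so Hall's theorem, applied level by level, shrinks the high sigmas to pairwise
   disjoint slices of size n0_m / 2^M + 1 avoiding all points used before.  These slices and
   eta0 on the low part form a condition whose POS lies in every POS(q_k).
   Conditions with the same m*, the same w and the same finitely many low sigmas get the same
   colour: any eta0 in POS(q_0) then serves for all of them, and there are countably many
   colours.  As only finitely many sigmas lie below the threshold, compatibility is decided by
   a finite part of the two conditions, which makes incompatibility analytic; the order is
   analytic through its combinatorial characterisation [refines]. *)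

From Stdlib Require Import Bool List Arith Lia Classical ClassicalEpsilon FunctionalExtensionality.
From Stdlib Require Cantor.
From mathcomp Require all_boot zify.
Import ListNotations.

Lemma dependent_choice {A : Type} {B : A -> Type} (P : forall a, B a -> Prop) :
  (forall a, exists b, P a b) -> exists f : forall a, B a, forall a, P a (f a).
Proof.
  intros h. exists (fun a => proj1_sig (constructive_indefinite_description _ (h a))).
  intros a. exact (proj2_sig (constructive_indefinite_description _ (h a))).
Qed.

Lemma pow2_pos b : 0 < 2 ^ b.
Proof. apply Nat.neq_0_lt_0, Nat.pow_nonzero. lia. Qed.

Lemma In_le_list_max l x : In x l -> x <= list_max l.
Proof.
  intros hx. assert (h : Forall (fun k => k <= list_max l) l) by (apply list_max_le; lia).
  rewrite Forall_forall in h. auto.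
Qed.

Lemma NoDup_length_le_bound (l : list nat) n : NoDup l -> (forall x, In x l -> x < n) -> length l <= n.
Proof.
  intros hl hb. rewrite <- (length_seq n 0). apply NoDup_incl_length; auto.
  intros x hx. apply in_seq. specialize (hb x hx). lia.
Qed.

Lemma listable {A : Type} (P : A -> Prop) (c : nat) :
  (forall l, NoDup l -> (forall a, In a l -> P a) -> length l <= c) ->
  exists l, NoDup l /\ (forall a, In a l <-> P a) /\ length l <= c.
Proof.
  intros hc.
  assert (grow : forall t, exists l, NoDup l /\ (forall a, In a l -> P a) /\
    (t <= length l \/ forall a, P a -> In a l)).
  { induction t as [|t [l [hl [hP [ht|hall]]]]].
    - exists []. repeat split; [constructor|contradiction|lia].
    - destruct (classic (forall a, P a -> In a l)) as [hall|hnot]; [exists l; auto|].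
      apply not_all_ex_not in hnot as [a ha]. apply imply_to_and in ha as [pa na].
      exists (a :: l). repeat split; [constructor; auto| |left; simpl; lia].
      intros b [<-|hb]; auto.
    - exists l. auto. }
  destruct (grow (S c)) as [l [hl [hP [ht|hall]]]].
  - specialize (hc l hl hP). lia.
  - exists l. repeat split; auto.
Qed.

Lemma length_le_of_fibres (c : nat) : forall n (s : list (nat * nat)), NoDup s ->
  (forall a, In a s -> fst a < n) ->
  (forall k (l : list nat), NoDup l -> (forall j, In j l -> In (k, j) s) -> length l <= c) ->
  length s <= n * c.
Proof.
  induction n as [|n IH]; intros s hs hlt hc.
  - destruct s as [|a s]; simpl; [lia|]. specialize (hlt a (or_introl eq_refl)). lia.
  - rewrite <- (filter_length (fun a => Nat.eqb (fst a) n) s).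
    assert (hfib : length (filter (fun a => Nat.eqb (fst a) n) s) <= c).
    { rewrite <- (length_map snd). apply (hc n).
      - apply NoDup_map_NoDup_ForallPairs; [|apply NoDup_filter; auto].
        intros [k j] [k' j'] ha hb e. apply filter_In in ha as [_ ha], hb as [_ hb].
        apply Nat.eqb_eq in ha, hb. simpl in *. congruence.
      - intros j hj. apply in_map_iff in hj as [[k j'] [e hj]]. simpl in e. subst.
        apply filter_In in hj as [hj e]. apply Nat.eqb_eq in e. simpl in e. subst. auto. }
    assert (hrest : length (filter (fun a => negb (Nat.eqb (fst a) n)) s) <= n * c).
    { apply IH; [apply NoDup_filter; auto| |].
      - intros a ha. apply filter_In in ha as [ha e]. specialize (hlt a ha).
        destruct (Nat.eqb_spec (fst a) n); simpl in e; [discriminate|lia].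
      - intros k l hl hh. apply (hc k l hl). intros j hj. apply hh in hj. apply filter_In in hj. tauto. }
    simpl. lia.
Qed.

Definition notin_dec (F : list nat) (x : nat) : bool :=
  if in_dec Nat.eq_dec x F then false else true.

Lemma length_filter_notin (F l : list nat) : NoDup l ->
  length l <= length (filter (notin_dec F) l) + length F.
Proof.
  intros hl. rewrite <- (filter_length (notin_dec F) l).
  enough (length (filter (fun x => negb (notin_dec F x)) l) <= length F) by lia.
  apply NoDup_incl_length; [apply NoDup_filter; auto|].
  intros x hx. apply filter_In in hx as [_ hx]. unfold notin_dec in hx.
  destruct (in_dec Nat.eq_dec x F); [auto|discriminate].
Qed.

Lemma sum_below_le f g m : (forall x, f x <= g x) -> sum_below f m <= sum_below g m.
Proof. intros h. induction m; simpl; [lia|]. specialize (h m). lia. Qed.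

Lemma sum_below_mul k f m : sum_below (fun x => k * f x) m = k * sum_below f m.
Proof. induction m; simpl; [lia|]. rewrite IHm. lia. Qed.

Lemma sum_below_mono f m m' : m <= m' -> sum_below f m <= sum_below f m'.
Proof. induction 1; simpl; lia. Qed.

Lemma sum_below_ge_first f m : 1 <= m -> f 0 <= sum_below f m.
Proof. induction 1; simpl; lia. Qed.

Section InfiniteEnumeration.
Variable P : nat -> bool.
Hypothesis P_unbounded : forall B, exists y, B <= y /\ P y = true.

Let count (y : nat) : nat := length (filter P (seq 0 y)).

Let count_S y : count (S y) = count y + (if P y then 1 else 0).
Proof. unfold count. rewrite seq_S, filter_app, length_app. simpl. destruct (P y); simpl; lia. Qed.

Let count_mono y y' : y <= y' -> count y <= count y'.
Proof. induction 1; [lia|]. rewrite count_S. lia. Qed.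

Let count_hits t : exists y, P y = true /\ count y = t.
Proof.
  assert (unbounded : forall s, exists y, s <= count y).
  { intros s. induction s as [|s [y hy]]; [exists 0; lia|].
    destruct (P_unbounded y) as [y' [hle hy']]. exists (S y').
    rewrite count_S, hy'. pose proof (count_mono _ _ hle). simpl. lia. }
  destruct (unbounded (S t)) as [Y hY]. induction Y as [|Y IH]; [unfold count in hY; simpl in hY; lia|].
  rewrite count_S in hY. destruct (Nat.eq_dec (count Y) t) as [e|ne].
  - exists Y. destruct (P Y); [auto|lia].
  - apply IH. destruct (P Y); lia.
Qed.

Let count_injective y y' : P y = true -> P y' = true -> count y = count y' -> y = y'.
Proof.
  intros h h' e. destruct (lt_eq_lt_dec y y') as [[l|l]|l]; auto; exfalso.
  - pose proof (count_mono (S y) y' l) as hc. rewrite count_S, h in hc. lia.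
  - pose proof (count_mono (S y') y l) as hc. rewrite count_S, h' in hc. lia.
Qed.

Lemma enumerate_infinite : exists e : nat -> nat, (forall t, P (e t) = true) /\
  (forall t t', e t = e t' -> t = t') /\ (forall y, P y = true -> exists t, e t = y).
Proof.
  destruct (choice _ count_hits) as [e he]. exists e. split; [|split].
  - intros t. apply he.
  - intros t t' E. rewrite <- (proj2 (he t)), <- (proj2 (he t')), E. reflexivity.
  - intros y hy. exists (count y). apply count_injective; auto; apply he.
Qed.
End InfiniteEnumeration.

(** * Partial functions and avoidance *)

Section PartialFunctions.
Context {H : nat -> Type}.

Definition agrees (eta : forall i, H i) (w : forall i, option (H i)) : Prop :=
  forall i x, w i = Some x -> eta i = x.

Definition avoids (eta : forall i, H i) (s : forall i, option (H i)) : Prop :=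
  exists i x, s i = Some x /\ eta i <> x.

Definition conflicts (w s : forall i, option (H i)) : Prop :=
  exists i x y, s i = Some x /\ w i = Some y /\ x <> y.

Definition sub_pfun (t s : forall i, option (H i)) : Prop :=
  forall i x, t i = Some x -> s i = Some x.

Lemma in_dom_Some (f : finfn H) i : in_dom f i <-> exists x, ffval f i = Some x.
Proof.
  unfold in_dom. destruct (ffval f i); split; intros hh; eauto; try congruence.
  destruct hh; discriminate.
Qed.

Lemma restrict_bounded (g : forall i, option (H i)) (l : list nat) :
  exists N, forall i, N <= i -> (if in_dec Nat.eq_dec i l then g i else None) = None.
Proof.
  exists (S (list_max l)). intros i hi. destruct (in_dec Nat.eq_dec i l) as [h|h]; [|reflexivity].
  apply In_le_list_max in h. lia.
Qed.

Definition restrict (g : forall i, option (H i)) (l : list nat) : finfn H :=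
  exist _ (fun i => if in_dec Nat.eq_dec i l then g i else None) (restrict_bounded g l).

Lemma restrict_in g l i : In i l -> ffval (restrict g l) i = g i.
Proof. intros h. simpl. destruct (in_dec Nat.eq_dec i l); tauto. Qed.

Lemma restrict_notin g l i : ~ In i l -> ffval (restrict g l) i = None.
Proof. intros h. simpl. destruct (in_dec Nat.eq_dec i l); tauto. Qed.

Lemma in_dom_restrict g l i : in_dom (restrict g l) i -> In i l.
Proof. intros h. apply NNPP. intros hi. apply h, restrict_notin, hi. Qed.

Lemma dom_enumerable (f : finfn H) : exists l, NoDup l /\ forall i, In i l <-> in_dom f i.
Proof.
  destruct (proj2_sig f) as [N hN].
  exists (filter (fun i => match ffval f i with Some _ => true | None => false end) (seq 0 N)).
  split; [apply NoDup_filter, seq_NoDup|]. intros i. rewrite filter_In, in_seq, in_dom_Some.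
  destruct (ffval f i) eqn:E; split.
  - eauto.
  - intros _. split; [|reflexivity]. split; [lia|]. apply Nat.nle_gt. intros hi.
    specialize (hN i hi). unfold ffval in E. congruence.
  - intros [_ h]. discriminate.
  - intros [x h]. discriminate.
Qed.

Definition dom_list (f : finfn H) : list nat :=
  proj1_sig (constructive_indefinite_description _ (dom_enumerable f)).

Lemma NoDup_dom_list f : NoDup (dom_list f).
Proof. apply (proj2_sig (constructive_indefinite_description _ (dom_enumerable f))). Qed.

Lemma in_dom_list f i : In i (dom_list f) <-> in_dom f i.
Proof. apply (proj2_sig (constructive_indefinite_description _ (dom_enumerable f))). Qed.

Hypothesis two_values : forall i, exists a b : H i, a <> b.

Lemma exists_other i (x : H i) : exists y : H i, y <> x.
Proof.
  destruct (two_values i) as [a [b hab]].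
  destruct (classic (a = x)) as [<-|ne]; [exists b|exists a]; auto.
Qed.

Lemma avoid_disjoint (w : forall i, option (H i)) {I : Type} (tau : I -> forall i, option (H i)) :
  (forall a b i, a <> b -> tau a i <> None -> tau b i = None) ->
  (forall a, conflicts w (tau a) \/ exists i, tau a i <> None /\ w i = None) ->
  exists eta, agrees eta w /\ forall a, avoids eta (tau a).
Proof.
  intros hdisj hfree.
  assert (hpoint : forall i, exists v : H i, (forall y, w i = Some y -> v = y) /\
    (w i = None -> forall a x, tau a i = Some x -> v <> x)).
  { intros i. destruct (w i) as [y|] eqn:Ew.
    - exists y. split; [congruence|discriminate].
    - destruct (classic (exists a x, tau a i = Some x)) as [[a [x hx]]|hnone].
      + destruct (exists_other i x) as [v hv]. exists v. split; [discriminate|].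
        intros _ a' x' hx'. destruct (classic (a' = a)) as [<-|ne].
        * congruence.
        * exfalso. rewrite (hdisj a a' i) in hx'; congruence.
      + destruct (two_values i) as [v _]. exists v. split; [discriminate|].
        intros _ a x hx. exfalso. eauto. }
  destruct (dependent_choice _ hpoint) as [eta heta]. exists eta. split.
  - intros i y hy. apply heta, hy.
  - intros a. destruct (hfree a) as [[i [x [y [hx [hy ne]]]]]|[i [hi hw]]].
    + exists i, x. split; [exact hx|]. rewrite (proj1 (heta i) y hy). auto.
    + destruct (tau a i) as [x|] eqn:E; [|congruence].
      exists i, x. rewrite E. split; [reflexivity|]. exact (proj2 (heta i) hw a x E).
Qed.

End PartialFunctions.

(** * Conditions and their order *)

Section Conditions.
Variables (n0 n1 : nat -> nat).
Context {H : nat -> Type}.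
Hypothesis hN : in_N n0 n1.
Hypothesis two_values : forall i, exists a b : H i, a <> b.

Definition disjoint_doms (p : point H) : Prop :=
  forall a b i, a <> b -> in_dom (p a) i -> ~ in_dom (p b) i.

(* [ms] is the [m*] of the condition and [V j] is the [m] with [j] in [V_m]. *)
Definition cond_witness (p : point H) (ms : nat) (V : nat -> nat) : Prop :=
  (forall j, ms <= V j) /\
  (forall m, ms <= m -> forall l : list nat, NoDup l ->
      (forall j, In j l -> V j = m) -> length l <= n1 m * 2 ^ ms) /\
  (forall j, exists l : list nat, NoDup l /\
      (forall i, In i l -> in_dom (p (S j)) i) /\ n0 (V j) <= length l * 2 ^ ms).

Lemma n0_gt4 m : 4 < n0 m.
Proof. apply hN. Qed.

Lemma n0_mono m m' : m <= m' -> n0 m <= n0 m'.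
Proof. induction 1; [lia|]. destruct (proj1 hN m0). lia. Qed.

Lemma pow_lt_n0 m : 1 <= m -> 2 ^ (2 * (m + 2)) < n0 m.
Proof.
  intros hm. pose proof (proj1 (proj2 hN) m) as h.
  pose proof (sum_below_ge_first (fun m => n0 m * n1 m) m hm) as h0.
  pose proof (n0_gt4 0). destruct (proj1 hN 0).
  set (T := sum_below (fun m => n0 m * n1 m) m) in *. simpl in h0.
  assert (1 <= T) by nia. nia.
Qed.

Lemma witness_dom_size p ms V : cond_witness p ms V ->
  forall j, n0 (V j) <= length (dom_list (p (S j))) * 2 ^ ms.
Proof.
  intros [_ [_ h]] j. destruct (h j) as [l [hl [hdom hsize]]].
  enough (length l <= length (dom_list (p (S j)))) by nia.
  apply NoDup_incl_length; [exact hl|]. intros i hi. apply in_dom_list, hdom, hi.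
Qed.

Lemma dom_sigma_escapes p ms V : cond_witness p ms V ->
  forall j i, exists i', i' <> i /\ in_dom (p (S j)) i'.
Proof.
  intros hw j i. pose proof (witness_dom_size p ms V hw j) as hsize.
  pose proof (n0_mono _ _ (proj1 hw j)) as hmono.
  assert (hlen : 2 <= length (dom_list (p (S j)))).
  { destruct (Nat.eq_dec ms 0) as [->|ne].
    - pose proof (n0_gt4 (V j)). simpl in hsize. lia.
    - pose proof (pow_lt_n0 ms ltac:(lia)).
      assert (2 ^ ms <= 2 ^ (2 * (ms + 2))) by (apply Nat.pow_le_mono_r; lia).
      destruct (dom_list (p (S j))) as [|u [|v l]]; simpl in *; nia. }
  pose proof (NoDup_dom_list (p (S j))) as hnd.
  destruct (dom_list (p (S j))) as [|u [|v l]] eqn:E; simpl in hlen; try lia.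
  assert (hu : in_dom (p (S j)) u) by (apply in_dom_list; rewrite E; simpl; auto).
  assert (hv : in_dom (p (S j)) v) by (apply in_dom_list; rewrite E; simpl; auto).
  destruct (Nat.eq_dec u i) as [<-|ne]; [exists v|exists u]; split; auto.
  inversion hnd. intros ->. simpl in *. tauto.
Qed.

Lemma dom_w_sigma_disjoint p i j x :
  disjoint_doms p -> ffval (p (S j)) i = Some x -> ffval (p 0) i = None.
Proof.
  intros hd hx. destruct (ffval (p 0) i) eqn:E; [|reflexivity]. exfalso.
  apply (hd 0 (S j) i); [discriminate| |]; unfold in_dom; congruence.
Qed.

Lemma sigmas_disjoint p a b i :
  disjoint_doms p -> a <> b -> ffval (p (S a)) i <> None -> ffval (p (S b)) i = None.
Proof.
  intros hd ne ha. destruct (ffval (p (S b)) i) eqn:E; [|reflexivity]. exfalso.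
  apply (hd (S a) (S b) i); [congruence|exact ha|unfold in_dom; congruence].
Qed.

Lemma POS_nonempty p : is_cond n0 n1 H p -> exists eta, POS p eta.
Proof.
  intros [hd [ms [V hw]]].
  destruct (avoid_disjoint two_values (ffval (p 0)) (fun j => ffval (p (S j)))) as [eta [h1 h2]].
  - intros a b i ne. apply sigmas_disjoint; auto.
  - intros a. right. destruct (dom_sigma_escapes p ms V hw a 0) as [i [_ hi]].
    apply in_dom_Some in hi as [x hx]. exists i. split; [congruence|].
    exact (dom_w_sigma_disjoint p i a x hd hx).
  - exists eta. split; assumption.
Qed.

Definition refines (p q : point H) : Prop :=
  sub_pfun (ffval (p 0)) (ffval (q 0)) /\
  forall j, conflicts (ffval (q 0)) (ffval (p (S j))) \/
            exists k, sub_pfun (ffval (q (S k))) (ffval (p (S j))).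

Lemma refines_Qle p q : refines p q -> Qle p q.
Proof.
  intros [hw hs] eta [ew es]. split.
  - intros i a ha. apply ew, hw, ha.
  - intros j. destruct (hs j) as [[i [x [y [hx [hy ne]]]]]|[k hk]].
    + exists i, x. split; [exact hx|]. rewrite (ew i y hy). auto.
    + destruct (es k) as [i [x [hx ne]]]. exists i, x. auto.
Qed.

Lemma Qle_sub_w p q : is_cond n0 n1 H p -> is_cond n0 n1 H q -> Qle p q ->
  sub_pfun (ffval (p 0)) (ffval (q 0)).
Proof.
  intros hp hq hle i a ha. destruct (ffval (q 0) i) as [b|] eqn:E.
  - destruct (POS_nonempty q hq) as [eta he].
    pose proof (proj1 he i b E). pose proof (proj1 (hle eta he) i a ha). congruence.
  - exfalso. destruct (POS_nonempty p hp) as [etap [hp0 _]].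
    destruct hq as [hd [ms [V hw]]].
    (* An [eta] extending [w^q] and avoiding the sigmas of [q] away from [i] as well as the
       singleton [i |-> a] would lie in POS q but not in POS p. *)
    set (tau := fun t : option nat => match t with
      | None => fun i' => if Nat.eq_dec i' i then Some (etap i') else None
      | Some k => fun i' => if Nat.eq_dec i' i then None else ffval (q (S k)) i' end).
    destruct (avoid_disjoint two_values (ffval (q 0)) tau) as [eta [h1 h2]].
    + intros [k|] [k'|] i' ne; simpl; destruct (Nat.eq_dec i' i); try congruence.
      apply sigmas_disjoint; [exact hd|congruence].
    + intros [k|]; right.
      * destruct (dom_sigma_escapes q ms V hw k i) as [i' [ne hi']].
        apply in_dom_Some in hi' as [x hx]. exists i'. simpl.
        destruct (Nat.eq_dec i' i); [contradiction|].
        split; [congruence|exact (dom_w_sigma_disjoint q i' k x hd hx)].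
      * exists i. simpl. destruct (Nat.eq_dec i i); [|contradiction]. split; [discriminate|exact E].
    + assert (hpos : POS q eta).
      { split; [exact h1|]. intros k. destruct (h2 (Some k)) as [i' [x [hx ne]]].
        simpl in hx. destruct (Nat.eq_dec i' i); [discriminate|]. exists i', x. auto. }
      destruct (h2 None) as [i' [x [hx ne]]]. simpl in hx.
      destruct (Nat.eq_dec i' i) as [->|]; [|discriminate]. injection hx as <-.
      apply ne. rewrite (hp0 i a ha). apply (proj1 (hle eta hpos) i a ha).
Qed.

Lemma Qle_sub_sigma p q : is_cond n0 n1 H q -> Qle p q ->
  forall j, conflicts (ffval (q 0)) (ffval (p (S j))) \/
            exists k, sub_pfun (ffval (q (S k))) (ffval (p (S j))).
Proof.
  intros [hd _] hle j. apply NNPP. intros hn. apply not_or_and in hn as [hnc hns].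
  (* Otherwise some [eta] extending both [w^q] and [sigma^p_j] avoids every [sigma^q_k]. *)
  set (w' := fun i => match ffval (q 0) i with Some y => Some y | None => ffval (p (S j)) i end).
  destruct (avoid_disjoint two_values w' (fun k => ffval (q (S k)))) as [eta [h1 h2]].
  - intros a b i ne. apply sigmas_disjoint; auto.
  - intros k. assert (hs : ~ sub_pfun (ffval (q (S k))) (ffval (p (S j)))) by eauto.
    apply not_all_ex_not in hs as [i hs]. apply not_all_ex_not in hs as [x hs].
    apply imply_to_and in hs as [hx hnx].
    pose proof (dom_w_sigma_disjoint q i k x hd hx) as hw.
    destruct (ffval (p (S j)) i) as [y|] eqn:E.
    + left. exists i, x, y. unfold w'. rewrite hw, E. repeat split; congruence.
    + right. exists i. unfold w'. rewrite hw, E. split; congruence.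
  - assert (hpos : POS q eta).
    { split; [|exact h2]. intros i x hx. apply h1. unfold w'. rewrite hx. reflexivity. }
    destruct (proj2 (hle eta hpos) j) as [i [x [hx ne]]]. apply ne, h1. unfold w'.
    destruct (ffval (q 0) i) as [y|] eqn:E; [|exact hx].
    destruct (classic (x = y)) as [->|nxy]; [reflexivity|].
    exfalso. apply hnc. exists i, x, y. auto.
Qed.

Lemma Qle_refines p q : is_cond n0 n1 H p -> is_cond n0 n1 H q -> Qle p q -> refines p q.
Proof.
  intros hp hq hle. split; [apply Qle_sub_w; auto|apply Qle_sub_sigma; auto].
Qed.

End Conditions.

(** * Arithmetic of the parameters *)

Section Room.
Variables (n0 n1 : nat -> nat).
Hypothesis hN : in_N n0 n1.

Definition slice_size (M m : nat) : nat := n0 m / 2 ^ M + 1.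
Definition level_cap (n M0 m : nat) : nat := (n + 1) * (n1 m * 2 ^ M0).
Definition threshold (n M0 C : nat) : nat := M0 + n + C + 5.

Lemma slice_size_spec M m : n0 m <= slice_size M m * 2 ^ M.
Proof.
  unfold slice_size. pose proof (pow2_pos M).
  pose proof (Nat.div_mod (n0 m) (2 ^ M) ltac:(lia)).
  pose proof (Nat.mod_upper_bound (n0 m) (2 ^ M) ltac:(lia)). nia.
Qed.

Lemma slice_size_le M m : slice_size M m <= 2 * n0 m.
Proof.
  unfold slice_size. pose proof (n0_gt4 n0 n1 hN m).
  assert (n0 m / 2 ^ M <= n0 m) by (apply Nat.Div0.div_le_upper_bound; pose proof (pow2_pos M); nia).
  lia.
Qed.

Lemma pow_threshold_bound n M0 C m : threshold n M0 C <= m ->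
  32 * 2 ^ M0 * 2 ^ M0 * (n + 1) * (n + 1 + C) <= 2 ^ (2 * (m + 2)).
Proof.
  intros hm. pose proof (Nat.pow_gt_lin_r 2 n ltac:(lia)).
  pose proof (Nat.pow_gt_lin_r 2 (n + C) ltac:(lia)).
  apply (Nat.le_trans _ (2 ^ 5 * 2 ^ M0 * 2 ^ M0 * 2 ^ n * 2 ^ (n + C))).
  - change (2 ^ 5) with 32. repeat apply Nat.mul_le_mono; lia.
  - rewrite <- !Nat.pow_add_r. apply Nat.pow_le_mono_r; unfold threshold in hm; lia.
Qed.

(* Above the threshold, a sigma of a condition with [m* <= M0] has room for [n + 1] slices
   of its own level, [C] reserved points and twice all slices of the lower levels (the second
   copy pays for one witness point per low sigma). *)
Lemma room n M0 C m : threshold n M0 C <= m ->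
  2 ^ M0 * ((n + 1) * slice_size (M0 + n + 3) m + C +
    2 * sum_below (fun m' => level_cap n M0 m' * slice_size (M0 + n + 3) m') m) <= n0 m.
Proof.
  intros hm.
  set (A := 2 ^ M0). set (x := n0 m). set (q := x / 2 ^ (M0 + n + 3)).
  set (T := sum_below (fun m => n0 m * n1 m) m).
  set (L := sum_below (fun m' => level_cap n M0 m' * slice_size (M0 + n + 3) m') m).
  set (P := 2 ^ (2 * (m + 2))).
  assert (hA : 1 <= A) by apply pow2_pos.
  assert (hP : P * T < x) by apply hN.
  assert (hT : 1 <= T).
  { pose proof (sum_below_ge_first (fun m => n0 m * n1 m) m ltac:(unfold threshold in hm; lia)).
    pose proof (n0_gt4 n0 n1 hN 0). destruct (proj1 hN 0). simpl in *. nia. }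
  assert (hT1 : 8 * (A * (n + 1) * q) <= x).
  { assert (e : 2 ^ (M0 + n + 3) = 8 * A * 2 ^ n) by (unfold A; rewrite !Nat.pow_add_r; simpl; lia).
    pose proof (Nat.Div0.mul_div_le x (2 ^ (M0 + n + 3))) as hq. fold q in hq. rewrite e in hq.
    assert (A * (n + 1) * q <= A * 2 ^ n * q).
    { apply Nat.mul_le_mono_r, Nat.mul_le_mono_l. pose proof (Nat.pow_gt_lin_r 2 n). lia. }
    lia. }
  assert (hL : L <= 2 * (n + 1) * A * T).
  { unfold L, T. rewrite <- sum_below_mul. apply sum_below_le. intros y.
    unfold level_cap. fold A.
    apply (Nat.le_trans _ ((n + 1) * (n1 y * A) * (2 * n0 y))).
    - apply Nat.mul_le_mono_l, slice_size_le.
    - apply Nat.eq_le_incl. ring. }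
  pose proof (pow_threshold_bound n M0 C m hm) as hpow. fold A P in hpow.
  assert (hT2 : 4 * (A * (n + 1 + C)) <= x) by nia.
  assert (hT3 : 16 * (A * L) <= x) by nia.
  (* The three summands below take at most [x/8], [x/4] and [x/8]. *)
  change (slice_size (M0 + n + 3) m) with (q + 1).
  replace (A * ((n + 1) * (q + 1) + C + 2 * L)) with
    (A * (n + 1) * q + A * (n + 1 + C) + 2 * (A * L)) by ring.
  lia.
Qed.

End Room.

Section Levels.
Variables (n0 n1 : nat -> nat).
Context {H : nat -> Type}.
Variables (n : nat) (q : nat -> point H) (ms : nat -> nat) (V : nat -> nat -> nat) (M0 : nat).
Hypothesis hq : forall k, k <= n -> cond_witness n0 n1 (q k) (ms k) (V k) /\ ms k <= M0.

Lemma level_fibre_bound k m l : k <= n -> NoDup l -> (forall j, In j l -> V k j = m) ->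
  length l <= n1 m * 2 ^ M0.
Proof.
  intros hk hl hj. destruct (hq k hk) as [[hge [hcount _]] hM0].
  destruct l as [|j l']; [simpl; lia|].
  assert (hm : ms k <= m) by (rewrite <- (hj j (or_introl eq_refl)); apply hge).
  specialize (hcount m hm _ hl hj).
  assert (2 ^ ms k <= 2 ^ M0) by (apply Nat.pow_le_mono_r; lia). nia.
Qed.

Lemma level_listable m : exists l, NoDup l /\
  (forall a, In a l <-> fst a <= n /\ V (fst a) (snd a) = m) /\ length l <= level_cap n1 n M0 m.
Proof.
  apply listable. intros s hs hin. unfold level_cap. rewrite Nat.add_1_r.
  apply length_le_of_fibres; [exact hs| |].
  - intros a ha. apply hin in ha. lia.
  - intros k l hl hkl. destruct l as [|j l']; [simpl; lia|].
    assert (hk : k <= n) by (apply (hin (k, j)), hkl; left; reflexivity).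
    apply (level_fibre_bound k m); auto. intros j' hj'. apply (hin (k, j')), hkl, hj'.
Qed.

Lemma low_listable L : exists l,
  (forall a, In a l <-> fst a <= n /\ V (fst a) (snd a) < L) /\
  length l <= sum_below (level_cap n1 n M0) L.
Proof.
  induction L as [|L [l [hl hlen]]].
  - exists []. split; [intros a; simpl; lia|simpl; lia].
  - destruct (level_listable L) as [l' [_ [hl' hlen']]].
    exists (l ++ l'). split.
    + intros a. rewrite in_app_iff, hl, hl'. lia.
    + rewrite length_app. simpl. lia.
Qed.

End Levels.

(** * Hall's theorem and disjoint slices *)

Module Marriage.
Import all_boot zify.
Local Set Implicit Arguments.
Local Unset Strict Implicit.

Section Hall.
Variables (I T : finType).

Definition hall_cond (N : I -> {set T}) :=
  forall S : {set I}, #|S| <= #|\bigcup_(i in S) N i|.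

Definition shrink (N : I -> {set T}) (i : I) (x : T) : I -> {set T} :=
  fun j => if j == i then N i :\ x else N j.

Lemma shrink_sub N i x j : shrink N i x j \subset N j.
Proof. by rewrite /shrink; case: eqP => [->|_]; [exact: subD1set|]. Qed.

Lemma hall_singletons (N : I -> {set T}) : hall_cond N -> (forall i, #|N i| <= 1) ->
  exists f : I -> T, injective f /\ forall i, f i \in N i.
Proof.
move=> hc h1.
have: forall i, exists x, x \in N i.
  by move=> i; have := hc [set i]; rewrite cards1 big_set1 => /card_gt0P.
case/fin_all_exists => f hf; exists f; split => // i j eqf.
have hs k : N k = [set f k].
  have /cards1P [u hu] : #|N k| == 1 by rewrite eqn_leq h1; apply/card_gt0P; exists (f k).
  by move: (hf k); rewrite hu inE => /eqP ->.
apply/eqP; apply/negPn/negP => neq.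
have := hc [set i; j]; rewrite cards2 neq big_setU1 ?inE ?neq // big_set1 /=.
by rewrite (hs i) (hs j) eqf setUid cards1.
Qed.

(* Two sets violating Hall's condition after removing [x], resp. [y], from [N i] would
   make their union and intersection violate it for [N]. *)
Lemma hall_shrink (N : I -> {set T}) i x y : hall_cond N -> x \in N i -> y \in N i -> x != y ->
  hall_cond (shrink N i x) \/ hall_cond (shrink N i y).
Proof.
move=> hc xi yi xy.
have [/forallP h|] := boolP [forall S : {set I}, #|S| <= #|\bigcup_(j in S) shrink N i x j|]; first by left.
have [/forallP h|] := boolP [forall S : {set I}, #|S| <= #|\bigcup_(j in S) shrink N i y j|]; first by right.
rewrite !negb_forall => /existsP [S2 hS2] /existsP [S1 hS1]; exfalso.
rewrite -ltnNge in hS1; rewrite -ltnNge in hS2.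
have inS z (S : {set I}) : #|\bigcup_(j in S) shrink N i z j| < #|S| -> i \in S.
  move=> hS; apply/negPn/negP => niS; move: (hc S).
  have -> : \bigcup_(j in S) N j = \bigcup_(j in S) shrink N i z j.
    by apply: eq_bigr => j jS; rewrite /shrink; case: eqP => // eji; move: niS; rewrite -eji jS.
  lia.
have i1 := inS x S1 hS1; have i2 := inS y S2 hS2.
set A := \bigcup_(j in S1) shrink N i x j in hS1.
set B := \bigcup_(j in S2) shrink N i y j in hS2.
have hU : \bigcup_(j in S1 :|: S2) N j \subset A :|: B.
  apply/subsetP => z /bigcupP [j]; rewrite inE => /orP [jS|jS] zj; rewrite inE; apply/orP.
  - have [eji|nji] := eqVneq j i; last by left; apply/bigcupP; exists j; rewrite // /shrink (negbTE nji).
    subst j.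
    have [->|nzx] := eqVneq z x.
      by right; apply/bigcupP; exists i; rewrite // /shrink eqxx !inE xi andbT.
    by left; apply/bigcupP; exists i; rewrite // /shrink eqxx !inE nzx.
  - have [eji|nji] := eqVneq j i; last by right; apply/bigcupP; exists j; rewrite // /shrink (negbTE nji).
    subst j.
    have [->|nzy] := eqVneq z y.
      by left; apply/bigcupP; exists i; rewrite // /shrink eqxx !inE yi andbT eq_sym.
    by right; apply/bigcupP; exists i; rewrite // /shrink eqxx !inE nzy.
have hI : \bigcup_(j in (S1 :&: S2) :\ i) N j \subset A :&: B.
  apply/subsetP => z /bigcupP [j]; rewrite !inE => /andP [nji /andP [j1 j2]] zj.
  by apply/andP; split; apply/bigcupP; exists j; rewrite // /shrink (negbTE nji).
have := hc (S1 :|: S2); have := hc ((S1 :&: S2) :\ i).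
have := subset_leq_card hU; have := subset_leq_card hI.
have := cardsUI A B; have := cardsUI S1 S2.
have : #|(S1 :&: S2) :\ i| = #|S1 :&: S2| - 1 by rewrite (cardsD1 i (S1 :&: S2)) inE i1 i2 /=; lia.
have : 0 < #|S1 :&: S2| by apply/card_gt0P; exists i; rewrite inE i1 i2.
lia.
Qed.

Theorem hall (N : I -> {set T}) : hall_cond N ->
  exists f : I -> T, injective f /\ forall i, f i \in N i.
Proof.
move: {2}(\sum_i #|N i|) (leqnn (\sum_i #|N i|)) => k; elim: k N => [|k IH] N hk hc.
  apply: hall_singletons => // i; move: hk; rewrite leqn0 sum_nat_eq0 => /forallP /(_ i).
  by move=> /eqP ->.
have [/existsP [i /card_gt1P [x [y [xi yi xy]]]]|] := boolP [exists i, 1 < #|N i|]; last first.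
  by rewrite negb_exists => /forallP h; apply: hall_singletons => // i; rewrite leqNgt h.
have shrink_lt z : z \in N i -> \sum_j #|shrink N i z j| <= k.
  move=> zi.
  have hlt : #|shrink N i z i| < #|N i| by rewrite /shrink eqxx (cardsD1 z (N i)) zi.
  have hle : \sum_(j | j != i) #|shrink N i z j| <= \sum_(j | j != i) #|N j|.
    by apply: leq_sum => j _; apply/subset_leq_card/shrink_sub.
  move: hk; rewrite (bigD1 i) //= [\sum_j #|shrink N i z j|](bigD1 i) //=.
  lia.
have [h|h] := hall_shrink hc xi yi xy.
- have [f [fi ff]] := IH _ (shrink_lt x xi) h.
  by exists f; split => // j; exact: subsetP (shrink_sub N i x j) _ (ff j).
- have [f [fi ff]] := IH _ (shrink_lt y yi) h.
  by exists f; split => // j; exact: subsetP (shrink_sub N i y j) _ (ff j).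
Qed.

End Hall.

Section Selection.
Variables (I T : finType) (N : I -> {set T}) (K : nat).
Hypothesis degree_le : forall z, #|[set i | z \in N i]| <= K.

Lemma sum_card_le_degree (A : {set I}) :
  \sum_(i in A) #|N i| <= #|\bigcup_(i in A) N i| * K.
Proof.
set U := \bigcup_(i in A) N i.
have -> : \sum_(i in A) #|N i| = \sum_(i in A) \sum_(z in U) ((z \in N i) : nat).
  apply: eq_bigr => i iA.
  rewrite (eq_bigr (fun z => if z \in N i then 1 else 0)); last by move=> z _; case: (z \in N i).
  rewrite -big_mkcondr sum1_card; apply: eq_card => z; rewrite [X in _ = X]unfold_in /=.
  by have [zi|] := boolP (z \in N i); rewrite ?andbT ?andbF //; apply/esym/bigcupP; exists i.
rewrite exchange_big /= -sum_nat_const; apply: leq_sum => z _.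
rewrite (eq_bigr (fun i => if z \in N i then 1 else 0)); last by move=> i _; case: (z \in N i).
rewrite -big_mkcondr sum1_card; apply: leq_trans (degree_le z).
by apply/subset_leq_card/subsetP => i; rewrite unfold_in inE => /andP [].
Qed.

Lemma disjoint_selection (d : nat) : 0 < K -> (forall i, K * d <= #|N i|) ->
  exists f : I * 'I_d -> T, injective f /\ forall c, f c \in N c.1.
Proof.
(* Hall's condition for [d] copies of every [N i] holds by double counting:
   [|S| K <= |A| d K <= sum_(i in A) |N i| <= |U| K]. *)
move=> K0 hsize; apply: (hall (N := fun c => N c.1)) => S.
set A := [set c.1 | c in S].
have e1 : #|S| <= #|A| * d.
  have : #|S| <= #|setX A [set: 'I_d]|.
    apply/subset_leq_card/subsetP => c cS; rewrite inE in_setT andbT; apply/imsetP; by exists c.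
  by rewrite cardsX cardsT card_ord.
have -> : \bigcup_(c in S) N c.1 = \bigcup_(i in A) N i.
  apply/setP => z; apply/bigcupP/bigcupP => [[c cS zc]|[i /imsetP [c cS ->] zi]].
    by exists c.1 => //; apply/imsetP; exists c.
  by exists c.
have e2 := sum_card_le_degree A.
have e3 : #|A| * (K * d) <= \sum_(i in A) #|N i| by rewrite -sum_nat_const; apply: leq_sum.
move: e1 e2 e3; set a := #|A|; set u := #|\bigcup_(i in A) N i|; nia.
Qed.

End Selection.

Lemma InP (T : eqType) (x : T) (s : seq T) : reflect (List.In x s) (x \in s).
Proof.
elim: s => [|y s IH] /=; first by constructor.
by rewrite inE; apply: (iffP orP) => [[/eqP ->|/IH]|[->|/IH]]; auto.
Qed.

Lemma NoDupP (T : eqType) (s : seq T) : reflect (List.NoDup s) (uniq s).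
Proof.
elim: s => [|y s IH] /=; first by do 2 constructor.
apply: (iffP andP) => [[/InP h /IH h2]|h]; first by constructor.
by inversion h; subst; split; [apply/InP|apply/IH].
Qed.

Lemma disjoint_subseqs (l : seq (nat * nat)) (D : nat * nat -> seq nat) (K d : nat) :
  0 < K ->
  (forall a, List.In a l -> K * d <= size (D a) /\ List.NoDup (D a)) ->
  (forall x (s : seq (nat * nat)), List.NoDup s ->
     (forall a, List.In a s -> List.In a l /\ List.In x (D a)) -> size s <= K) ->
  exists E : nat * nat -> seq nat, forall a, List.In a l ->
    List.NoDup (E a) /\ size (E a) = d /\ List.incl (E a) (D a) /\
    forall b, List.In b l -> a <> b -> forall x, List.In x (E a) -> ~ List.In x (E b).
Proof.
move=> K0 hsize hdeg.
set U := flatten (map D l).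
pose N (a : seq_sub l) := [set z : seq_sub U | val z \in D (val a)].
have cardN a : #|N a| = size (D (val a)).
  have [_ /NoDupP uD] := hsize _ (elimT (InP _ _) (valP a)).
  have -> : #|N a| = size (pmap (insub : nat -> option (seq_sub U)) (D (val a))).
    by rewrite -(card_uniqP (pmap_sub_uniq _ uD)); apply: eq_card => z; rewrite inE mem_pmap_sub.
  rewrite size_pmap_sub -(count_predT (D (val a))); apply/eq_in_count => x xD /=.
  by apply/flattenP; exists (D (val a)) => //; apply: map_f; exact: valP.
have [f [finj fN]] : exists f : seq_sub l * 'I_d -> seq_sub U, injective f /\ forall c, f c \in N c.1.
  apply: (disjoint_selection (K := K)) => // [z|a]; last first.
    by rewrite cardN; have [] := hsize _ (elimT (InP _ _) (valP a)).
  rewrite cardE -(size_map val); apply: hdeg (val z) _ _ _.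
    by apply/NoDupP; rewrite map_inj_uniq ?enum_uniq //; exact: val_inj.
  move=> a /InP /mapP [a' a'S ->]; split; first by apply/InP; exact: valP.
  by move: a'S; rewrite mem_enum !inE => h; apply/InP.
exists (fun a => if insub a is Some a' then [seq val (f (a', t)) | t <- enum 'I_d] else [::]).
move=> a /InP al; rewrite insubT /=.
split; first by apply/NoDupP; rewrite map_inj_uniq ?enum_uniq // => t t' /val_inj /finj [].
split; first by rewrite size_map size_enum_ord.
split; first by move=> x /InP /mapP [t _ ->]; apply/InP; have := fN (Sub a al, t); rewrite inE.
move=> b /InP bl ab x /InP /mapP [t _ ->]; rewrite insubT /=.
by move=> /InP /mapP [t' _ /val_inj /finj [eab _]].
Qed.

Lemma size_length (T : Type) (s : seq T) : size s = length s.
Proof. by elim: s => //= x s ->. Qed.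

Lemma disjoint_sublists (l : list (nat * nat)) (D : nat * nat -> list nat) (K d : nat) :
  lt 0 K ->
  (forall a, List.In a l -> le (Nat.mul K d) (length (D a)) /\ List.NoDup (D a)) ->
  (forall x (s : list (nat * nat)), List.NoDup s ->
     (forall a, List.In a s -> List.In a l /\ List.In x (D a)) -> le (length s) K) ->
  exists E : nat * nat -> list nat, forall a, List.In a l ->
    List.NoDup (E a) /\ length (E a) = d /\ List.incl (E a) (D a) /\
    forall b, List.In b l -> a <> b -> forall x, List.In x (E a) -> ~ List.In x (E b).
Proof.
move=> /ltP K0 hsize hdeg.
case: (@disjoint_subseqs l D K d K0) => [a al|x s hs hh|E hE].
- by have [/leP h nd] := hsize a al; rewrite size_length.
- by rewrite size_length; apply/leP; exact: hdeg hs hh.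
by exists E => a al; rewrite -size_length; exact: hE.
Qed.

End Marriage.

Section Allocation.
Variables (rel : nat * nat -> Prop) (lev : nat * nat -> nat) (D : nat * nat -> list nat)
  (X0 : list nat) (K : nat) (d cnt : nat -> nat).
Variable level : nat -> list (nat * nat).
Hypothesis level_spec : forall m,
  NoDup (level m) /\ (forall a, In a (level m) <-> rel a /\ lev a = m) /\ length (level m) <= cnt m.

Definition used_bound (m : nat) : nat := length X0 + sum_below (fun m => cnt m * d m) m.

Variable select : list nat -> nat -> nat * nat -> list nat.
Hypothesis select_spec : forall F m, length F <= used_bound m -> forall a, In a (level m) ->
  NoDup (select F m a) /\ length (select F m a) = d m /\
  incl (select F m a) (filter (notin_dec F) (D a)) /\
  forall b, In b (level m) -> a <> b -> forall x, In x (select F m a) -> ~ In x (select F m b).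

Fixpoint used (m : nat) : list nat :=
  match m with
  | 0 => X0
  | S m' => used m' ++ concat (map (select (used m') m') (level m'))
  end.

Lemma used_length m : length (used m) <= used_bound m.
Proof.
  induction m as [|m IH]; unfold used_bound in *; simpl; [lia|].
  rewrite length_app.
  assert (hlen : length (concat (map (select (used m) m) (level m))) = length (level m) * d m).
  { assert (hsel : forall a, In a (level m) -> length (select (used m) m a) = d m)
      by (intros a ha; apply (select_spec _ _ IH a ha)).
    clear IH. induction (level m) as [|a l IHl]; simpl; [lia|].
    rewrite length_app, IHl by (intros; apply hsel; simpl; auto).
    rewrite hsel by (simpl; auto). lia. }
  destruct (level_spec m) as [_ [_ hcnt]]. pose proof (Nat.mul_le_mono_r _ _ (d m) hcnt). lia.
Qed.

Lemma used_mono m m' : m <= m' -> incl (used m) (used m').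
Proof. induction 1; [apply incl_refl|]. simpl. apply incl_appl. auto. Qed.

Definition allocate (a : nat * nat) : list nat := select (used (lev a)) (lev a) a.

Lemma allocate_used a x : rel a -> In x (allocate a) -> In x (used (S (lev a))).
Proof.
  intros ra hx. simpl. apply in_or_app. right. apply in_concat.
  exists (allocate a). split; [unfold allocate; apply in_map, level_spec; auto|exact hx].
Qed.

Lemma allocate_fresh a x : rel a -> In x (allocate a) -> ~ In x (used (lev a)).
Proof.
  intros ra hx. assert (ha : In a (level (lev a))) by (apply level_spec; auto).
  apply (select_spec _ _ (used_length _) a ha) in hx. apply filter_In in hx as [_ hx].
  unfold notin_dec in hx. destruct (in_dec Nat.eq_dec x (used (lev a))); [discriminate|assumption].
Qed.

Lemma allocate_spec a : rel a ->
  NoDup (allocate a) /\ length (allocate a) = d (lev a) /\ incl (allocate a) (D a) /\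
  (forall x, In x (allocate a) -> ~ In x X0) /\
  forall b, rel b -> a <> b -> forall x, In x (allocate a) -> ~ In x (allocate b).
Proof.
  intros ra. assert (ha : In a (level (lev a))) by (apply level_spec; auto).
  destruct (select_spec _ _ (used_length _) a ha) as [h1 [h2 [h3 h4]]].
  split; [exact h1|split; [exact h2|split; [|split]]].
  - intros x hx. apply h3, filter_In in hx. tauto.
  - intros x hx hX. apply (allocate_fresh a x ra hx), (used_mono 0); [lia|exact hX].
  - intros b rb ab x hxa hxb.
    destruct (lt_eq_lt_dec (lev a) (lev b)) as [[hl|he]|hl].
    + apply (allocate_fresh b x rb hxb), (used_mono (S (lev a))); [lia|].
      apply allocate_used; auto.
    + apply (h4 b ltac:(apply level_spec; auto) ab x hxa). unfold allocate in hxb. rewrite <- he in hxb.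
      exact hxb.
    + apply (allocate_fresh a x ra hxa), (used_mono (S (lev b))); [lia|].
      apply allocate_used; auto.
Qed.

End Allocation.

(* Levels are processed upwards, each avoiding the points used below; inside a level every
   point lies in at most [K] of the sets [D a], which is what Hall's theorem needs. *)
Lemma allocation (rel : nat * nat -> Prop) (lev : nat * nat -> nat) (D : nat * nat -> list nat)
  (X0 : list nat) (K : nat) (d cnt : nat -> nat) :
  0 < K ->
  (forall m, exists l, NoDup l /\ (forall a, In a l <-> rel a /\ lev a = m) /\ length l <= cnt m) ->
  (forall m x s, NoDup s -> (forall a, In a s -> rel a /\ lev a = m /\ In x (D a)) -> length s <= K) ->
  (forall a, rel a -> NoDup (D a)) ->
  (forall a, rel a -> K * d (lev a) + length X0 + sum_below (fun m => cnt m * d m) (lev a) <= length (D a)) ->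
  exists E : nat * nat -> list nat, forall a, rel a ->
    NoDup (E a) /\ length (E a) = d (lev a) /\ incl (E a) (D a) /\
    (forall x, In x (E a) -> ~ In x X0) /\
    forall b, rel b -> a <> b -> forall x, In x (E a) -> ~ In x (E b).
Proof.
  intros K_pos hlevel hdeg hnd hlarge.
  destruct (choice _ hlevel) as [level level_spec].
  assert (hselect : forall Fm : list nat * nat, exists E : nat * nat -> list nat,
    length (fst Fm) <= used_bound X0 d cnt (snd Fm) -> forall a, In a (level (snd Fm)) ->
    NoDup (E a) /\ length (E a) = d (snd Fm) /\ incl (E a) (filter (notin_dec (fst Fm)) (D a)) /\
    forall b, In b (level (snd Fm)) -> a <> b -> forall x, In x (E a) -> ~ In x (E b)).
  { intros [F m]. simpl.
    destruct (classic (length F <= used_bound X0 d cnt m)) as [hF|hF];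
      [|exists (fun _ => []); intros; contradiction].
    destruct (level_spec m) as [_ [hin _]].
    destruct (@Marriage.disjoint_sublists (level m) (fun a => filter (notin_dec F) (D a)) K (d m))
      as [E hE]; [exact K_pos| | |exists E; intros _; exact hE].
    - intros a ha. apply hin in ha as [ra <-]. split; [|apply NoDup_filter; auto].
      pose proof (length_filter_notin F (D a) (hnd a ra)). pose proof (hlarge a ra).
      unfold used_bound in *. lia.
    - intros x s hs hh. apply (hdeg m x s hs). intros a ha.
      destruct (hh a ha) as [ha1 ha2]. apply hin in ha1. apply filter_In in ha2. tauto. }
  destruct (choice _ hselect) as [sel hsel].
  exists (allocate lev X0 level (fun F m => sel (F, m))). intros a ra.
  apply (allocate_spec rel lev D X0 d cnt level level_spec); [|exact ra].
  intros F m hF. exact (hsel (F, m) hF).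
Qed.

(** * Amalgamation *)

Section AmalgamConstruction.
Variables (n0 n1 : nat -> nat).
Context {H : nat -> Type}.
Variables (n : nat) (q : nat -> point H) (ms : nat -> nat) (V : nat -> nat -> nat) (M0 : nat).
Hypothesis hq : forall k, k <= n ->
  disjoint_doms (q k) /\ cond_witness n0 n1 (q k) (ms k) (V k) /\ ms k <= M0.
Variables (eta0 : forall i, H i) (W : list nat) (L : nat).
Hypothesis eta0_w : forall k, k <= n -> agrees eta0 (ffval (q k 0)).
Hypothesis W_w : forall k, k <= n -> forall i, in_dom (q k 0) i -> In i W.
Hypothesis eta0_low : forall k, k <= n -> forall j, V k j < L ->
  exists i x, ffval (q k (S j)) i = Some x /\ eta0 i <> x /\ In i W.
Hypothesis L_large : M0 + n + 3 <= L.
Hypothesis high_large : forall k, k <= n -> forall j, L <= V k j ->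
  (n + 1) * slice_size n0 (M0 + n + 3) (V k j) + length W +
  sum_below (fun m => level_cap n1 n M0 m * slice_size n0 (M0 + n + 3) m) (V k j)
  <= length (dom_list (q k (S j))).

(* Pairs [(k, j)] index the sigmas [sigma^(q k)_j]; the high ones are kept, shrunk to slices. *)
Let high (a : nat * nat) : Prop := fst a <= n /\ L <= V (fst a) (snd a).
Let lev (a : nat * nat) : nat := V (fst a) (snd a).
Let sigma (a : nat * nat) : finfn H := q (fst a) (S (snd a)).

Lemma slices_exist : exists E : nat * nat -> list nat, forall a, high a ->
  NoDup (E a) /\ length (E a) = slice_size n0 (M0 + n + 3) (lev a) /\
  incl (E a) (dom_list (sigma a)) /\ (forall x, In x (E a) -> ~ In x W) /\
  forall b, high b -> a <> b -> forall x, In x (E a) -> ~ In x (E b).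
Proof.
  apply (allocation high lev (fun a => dom_list (sigma a)) W (n + 1)
    (slice_size n0 (M0 + n + 3)) (level_cap n1 n M0)); [lia| | | |].
  - intros m. destruct (le_lt_dec L m) as [hm|hm].
    + destruct (level_listable n0 n1 n q ms V M0 (fun k hk => proj2 (hq k hk)) m)
        as [l [hnd [hin hlen]]].
      exists l. split; [exact hnd|split; [|exact hlen]]. intros a. rewrite hin.
      unfold high, lev. split; [|tauto]. intros [h1 h2]. rewrite h2. auto.
    + exists []. split; [constructor|split; [|simpl; lia]]. intros a. simpl. unfold high, lev. lia.
  - intros m x s hs hh. rewrite <- (length_map fst). apply NoDup_length_le_bound.
    + apply NoDup_map_NoDup_ForallPairs; [|exact hs]. intros [k j] [k' j'] ha hb e.
      destruct (hh _ ha) as [[hk _] [_ hxa]], (hh _ hb) as [_ [_ hxb]]. simpl in *. subst k'.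
      destruct (Nat.eq_dec j j') as [->|ne]; [reflexivity|]. exfalso.
      apply in_dom_list in hxa, hxb. apply (proj1 (hq k hk) (S j) (S j') x); auto.
    + intros k hk. apply in_map_iff in hk as [a [<- ha]]. destruct (hh a ha) as [[h _] _]. lia.
  - intros a _. apply NoDup_dom_list.
  - intros [k j] [hk hj]. apply (high_large k hk j hj).
Qed.

Lemma high_enumeration : exists e : nat -> nat * nat, (forall t, high (e t)) /\
  (forall t t', e t = e t' -> t = t') /\ (forall a, high a -> exists t, e t = a).
Proof.
  set (P := fun y => let a := Cantor.of_nat y in (fst a <=? n) && (L <=? lev a)).
  assert (hP : forall y, P y = true <-> high (Cantor.of_nat y)).
  { intros y. unfold P, high, lev. rewrite andb_true_iff, !Nat.leb_le. tauto. }
  destruct (enumerate_infinite P) as [e [he [einj esurj]]].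
  - intros B. destruct (low_listable n0 n1 n q ms V M0 (fun k hk => proj2 (hq k hk)) L) as [ll [hll _]].
    set (j := S (B + list_max (map snd ll))).
    exists (Cantor.to_nat (0, j)). split; [pose proof (Cantor.to_nat_non_decreasing 0 j); lia|].
    apply hP. rewrite Cantor.cancel_of_to. split; [simpl; lia|].
    apply Nat.nlt_ge. intros hlow.
    assert (hin : In (0, j) ll) by (apply hll; split; [simpl; lia|exact hlow]).
    apply (in_map snd), In_le_list_max in hin. simpl in hin. lia.
  - exists (fun t => Cantor.of_nat (e t)). split; [|split].
    + intros t. apply hP, he.
    + intros t t' E. apply einj. rewrite <- (Cantor.cancel_to_of (e t)), E. apply Cantor.cancel_to_of.
    + intros a ha. destruct (esurj (Cantor.to_nat a)) as [t ht].
      * apply hP. rewrite Cantor.cancel_of_to. exact ha.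
      * exists t. rewrite ht. apply Cantor.cancel_of_to.
Qed.

Section WithSlices.
Variables (E : nat * nat -> list nat) (e : nat -> nat * nat).
Hypothesis E_spec : forall a, high a ->
  NoDup (E a) /\ length (E a) = slice_size n0 (M0 + n + 3) (lev a) /\
  incl (E a) (dom_list (sigma a)) /\ (forall x, In x (E a) -> ~ In x W) /\
  forall b, high b -> a <> b -> forall x, In x (E a) -> ~ In x (E b).
Hypothesis e_high : forall t, high (e t).
Hypothesis e_inj : forall t t', e t = e t' -> t = t'.
Hypothesis e_onto : forall a, high a -> exists t, e t = a.

Definition amalgam : point H := fun t =>
  match t with
  | 0 => restrict (fun i => Some (eta0 i)) W
  | S t => restrict (ffval (sigma (e t))) (E (e t))
  end.

Lemma amalgam_disjoint : disjoint_doms amalgam.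
Proof.
  intros [|t] [|t'] i ne ha hb; [contradiction| | |].
  all: apply in_dom_restrict in ha; apply in_dom_restrict in hb.
  - apply (proj1 (proj2 (proj2 (proj2 (E_spec _ (e_high t'))))) i hb ha).
  - apply (proj1 (proj2 (proj2 (proj2 (E_spec _ (e_high t))))) i ha hb).
  - assert (ne' : e t <> e t') by (intros he; apply ne; f_equal; apply e_inj, he).
    exact (proj2 (proj2 (proj2 (proj2 (E_spec _ (e_high t))))) (e t') (e_high t') ne' i ha hb).
Qed.

Lemma amalgam_witness : cond_witness n0 n1 amalgam (M0 + n + 3) (fun t => lev (e t)).
Proof.
  split; [|split].
  - intros t. destruct (e_high t). unfold lev. lia.
  - intros m hm l hl hlev. rewrite <- (length_map e).
    destruct (level_listable n0 n1 n q ms V M0 (fun k hk => proj2 (hq k hk)) m) as [lm [_ [hin hlen]]].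
    apply (Nat.le_trans _ (length lm)).
    + apply NoDup_incl_length.
      * apply NoDup_map_NoDup_ForallPairs; [|exact hl]. intros t t' _ _. apply e_inj.
      * intros a ha. apply in_map_iff in ha as [t [<- ht]]. apply hin.
        split; [apply e_high|apply hlev, ht].
    + unfold level_cap in hlen. rewrite !Nat.pow_add_r in *.
      pose proof (Nat.pow_gt_lin_r 2 n ltac:(lia)). pose proof (pow2_pos M0).
      change (2 ^ 3) with 8. nia.
  - intros t. destruct (E_spec _ (e_high t)) as [hnd [hlen [hincl _]]].
    exists (E (e t)). split; [exact hnd|split].
    + intros i hi. simpl. unfold in_dom. rewrite restrict_in by exact hi.
      apply in_dom_list, hincl, hi.
    + rewrite hlen. apply slice_size_spec.
Qed.

Lemma amalgam_extends k : k <= n -> Qle (q k) amalgam.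
Proof.
  intros hk eta [hw hs]. split.
  - intros i x hx. rewrite <- (eta0_w k hk i x hx). apply hw.
    unfold amalgam. rewrite restrict_in; [reflexivity|]. apply (W_w k hk). unfold in_dom. congruence.
  - intros j. destruct (le_lt_dec L (V k j)) as [hj|hj].
    + destruct (e_onto (k, j) (conj hk hj)) as [t ht].
      destruct (hs t) as [i [x [hi ne]]]. exists i, x. split; [|exact ne].
      unfold amalgam in hi. rewrite ht in hi. destruct (in_dec Nat.eq_dec i (E (k, j))) as [hin|hin].
      * rewrite restrict_in in hi; auto.
      * rewrite restrict_notin in hi; [discriminate|exact hin].
    + destruct (eta0_low k hk j hj) as [i [x [hx [ne hW]]]]. exists i, x. split; [exact hx|].
      rewrite (hw i (eta0 i)); [exact ne|]. unfold amalgam. rewrite restrict_in; [reflexivity|exact hW].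
Qed.

End WithSlices.

Lemma amalgamation_core : exists r, is_cond n0 n1 H r /\ forall k, k <= n -> Qle (q k) r.
Proof.
  destruct slices_exist as [E hE]. destruct high_enumeration as [e [he [einj eonto]]].
  exists (amalgam E e). split.
  - split; [apply amalgam_disjoint; auto|]. eexists; eexists. apply amalgam_witness; auto.
  - intros k hk. apply amalgam_extends; auto.
Qed.

End AmalgamConstruction.

Section Amalgamation.
Variables (n0 n1 : nat -> nat).
Context {H : nat -> Type}.
Hypothesis hN : in_N n0 n1.
Hypothesis two_values : forall i, exists a b : H i, a <> b.

Lemma amalgamation n (q : nat -> point H) ms V M0 (eta0 : forall i, H i) W0 :
  (forall k, k <= n -> disjoint_doms (q k) /\ cond_witness n0 n1 (q k) (ms k) (V k) /\ ms k <= M0) ->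
  (forall k, k <= n -> agrees eta0 (ffval (q k 0))) ->
  (forall k, k <= n -> forall i, in_dom (q k 0) i -> In i W0) ->
  (forall k, k <= n -> forall j, V k j < threshold n M0 (length W0) ->
     avoids eta0 (ffval (q k (S j)))) ->
  exists r, is_cond n0 n1 H r /\ forall k, k <= n -> Qle (q k) r.
Proof.
  intros hq hw hW hlow. set (L := threshold n M0 (length W0)).
  destruct (low_listable n0 n1 n q ms V M0 (fun k hk => proj2 (hq k hk)) L) as [ll [hll hlen]].
  assert (hpick : forall a, exists i, fst a <= n -> V (fst a) (snd a) < L ->
    exists x, ffval (q (fst a) (S (snd a))) i = Some x /\ eta0 i <> x).
  { intros a. destruct (classic (fst a <= n /\ V (fst a) (snd a) < L)) as [[h1 h2]|h].
    - destruct (hlow _ h1 _ h2) as [i hi]. exists i. auto.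
    - exists 0. tauto. }
  destruct (choice _ hpick) as [c hc].
  apply (amalgamation_core n0 n1 n q ms V M0 hq eta0 (W0 ++ map c ll) L).
  - exact hw.
  - intros k hk i hi. apply in_or_app. left. apply (hW k hk i hi).
  - intros k hk j hj. destruct (hc (k, j) hk hj) as [x [hx ne]].
    exists (c (k, j)), x. split; [exact hx|split; [exact ne|]].
    apply in_or_app. right. apply in_map, hll. auto.
  - unfold L, threshold. lia.
  - intros k hk j hj. destruct (hq k hk) as [_ [hwit hms]].
    pose proof (witness_dom_size n0 n1 (q k) (ms k) (V k) hwit j) as hsize.
    pose proof (room n0 n1 hN n M0 (length W0) (V k j) hj) as hroom.
    set (slices := sum_below (fun m => level_cap n1 n M0 m * slice_size n0 (M0 + n + 3) m)) in *.
    assert (hWlen : length (W0 ++ map c ll) <= length W0 + slices (V k j)).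
    { rewrite length_app, length_map.
      enough (sum_below (level_cap n1 n M0) L <= slices (V k j)) by lia.
      apply (Nat.le_trans _ (slices L)); [|apply sum_below_mono, hj].
      apply sum_below_le. intros m. unfold slice_size. nia. }
    assert (2 ^ ms k <= 2 ^ M0) by (apply Nat.pow_le_mono_r; lia).
    pose proof (pow2_pos M0). nia.
Qed.

Lemma compatible_of_partial_POS (p0 p1 : point H) :
  is_cond n0 n1 H p0 -> is_cond n0 n1 H p1 ->
  exists N, forall eta, agrees eta (ffval (p0 0)) -> agrees eta (ffval (p1 0)) ->
    (forall j, j < N -> avoids eta (ffval (p0 (S j)))) ->
    (forall j, j < N -> avoids eta (ffval (p1 (S j)))) ->
    compatible (is_cond n0 n1 H) Qle p0 p1.
Proof.
  intros [hd0 [ms0 [V0 hw0]]] [hd1 [ms1 [V1 hw1]]].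
  set (q := fun k => match k with 0 => p0 | _ => p1 end).
  set (ms := fun k => match k with 0 => ms0 | _ => ms1 end).
  set (V := fun k => match k with 0 => V0 | _ => V1 end).
  assert (hq : forall k, k <= 1 -> disjoint_doms (q k) /\
    cond_witness n0 n1 (q k) (ms k) (V k) /\ ms k <= ms0 + ms1).
  { intros [|[|k]] hk; [| |lia]; (split; [|split]); simpl; auto; lia. }
  set (W0 := dom_list (p0 0) ++ dom_list (p1 0)).
  destruct (low_listable n0 n1 1 q ms V (ms0 + ms1) (fun k hk => proj2 (hq k hk))
    (threshold 1 (ms0 + ms1) (length W0))) as [ll [hll _]].
  exists (S (list_max (map snd ll))). intros eta he0 he1 ha0 ha1.
  destruct (amalgamation 1 q ms V (ms0 + ms1) eta W0 hq) as [r [hr hext]].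
  - intros [|[|k]] hk; [exact he0|exact he1|lia].
  - intros [|[|k]] hk i hi; [| |lia]; apply in_or_app; [left|right]; apply in_dom_list, hi.
  - intros k hk j hj.
    assert (hjN : j < S (list_max (map snd ll))).
    { apply Nat.lt_succ_r, In_le_list_max. apply (in_map snd ll (k, j)), hll. auto. }
    destruct k as [|[|k]]; [apply ha0, hjN|apply ha1, hjN|lia].
  - exists r. split; [exact hr|split; [apply (hext 0)|apply (hext 1)]; lia].
Qed.

Lemma compatible_iff_POS (p0 p1 : point H) : is_cond n0 n1 H p0 -> is_cond n0 n1 H p1 ->
  (compatible (is_cond n0 n1 H) Qle p0 p1 <-> exists eta, POS p0 eta /\ POS p1 eta).
Proof.
  intros h0 h1. split.
  - intros [r [hr [l0 l1]]]. destruct (POS_nonempty n0 n1 hN two_values r hr) as [eta he].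
    exists eta. split; [apply l0|apply l1]; exact he.
  - intros [eta [[a0 b0] [a1 b1]]]. destruct (compatible_of_partial_POS p0 p1 h0 h1) as [N hN'].
    apply (hN' eta); [exact a0|exact a1|intros j _; apply b0|intros j _; apply b1].
Qed.

End Amalgamation.

(** * Linkedness *)

Module Coding.
Import all_boot.

Lemma signature_countable : exists code : nat * seq (nat * nat) * seq (seq (nat * nat)) -> nat,
  forall x y, code x = code y -> x = y.
Proof. by exists pickle; exact: (pcan_inj (@pickleK _)). Qed.

End Coding.

Section Encoding.
Context {H : nat -> Type}.
Variable code : forall i, H i -> nat.
Hypothesis code_inj : forall i a b, code i a = code i b -> a = b.

Definition encode (f : finfn H) : list (nat * nat) :=
  map (fun i => (i, match ffval f i with Some a => code i a | None => 0 end)) (dom_list f).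

Lemma length_encode f : length (encode f) = length (dom_list f).
Proof. apply length_map. Qed.

Lemma encode_sub f g : encode f = encode g -> sub_pfun (ffval f) (ffval g).
Proof.
  intros e i x hx.
  assert (hin : In (i, code i x) (encode g)).
  { rewrite <- e. apply in_map_iff. exists i. rewrite hx. split; [reflexivity|].
    apply in_dom_list. unfold in_dom. congruence. }
  apply in_map_iff in hin as [i' [e' hi']]. injection e' as ei ex. subst i'.
  apply in_dom_list, in_dom_Some in hi' as [y hy]. rewrite hy in ex.
  rewrite (code_inj i y x ex) in hy. exact hy.
Qed.

Lemma encode_inj f g : encode f = encode g -> forall i, ffval f i = ffval g i.
Proof.
  intros e i. destruct (ffval f i) as [x|] eqn:E.
  - symmetry. apply (encode_sub f g e i x E).
  - destruct (ffval g i) as [y|] eqn:E2; [|reflexivity].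
    rewrite (encode_sub g f (eq_sym e) i y E2) in E. discriminate.
Qed.

End Encoding.

Lemma ccc_of_sigma_star_linked {X : Type} (P : X -> Prop) (le : X -> X -> Prop) :
  inhabited X -> sigma_star_linked P le -> ccc P le.
Proof.
  intros hinh hlinked A hA hanti. destruct (hlinked 1) as [c hc].
  exists (fun k => epsilon hinh (fun p => A p /\ c p = k)). intros p hp. exists (c p).
  set (p' := epsilon hinh (fun p' => A p' /\ c p' = c p)).
  assert (hp' : A p' /\ c p' = c p) by (apply epsilon_spec; exists p; auto).
  apply NNPP. intros ne. apply (hanti p p' hp (proj1 hp')); [congruence|].
  destruct (hc (fun k => match k with 0 => p | _ => p' end)) as [r [hr hle]].
  - intros [|k] _; [apply hA, hp|apply hA, hp'].
  - intros [|k] _; [reflexivity|apply hp'].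
  - exists r. split; [exact hr|split; [apply (hle 0)|apply (hle 1)]; lia].
Qed.

Section Linkedness.
Variables (n0 n1 : nat -> nat).
Context {H : nat -> Type}.
Hypothesis hN : in_N n0 n1.
Hypothesis two_values : forall i, exists a b : H i, a <> b.

Lemma linked_of_shared_data n (q : nat -> point H) M0 V :
  (forall k, k <= n -> disjoint_doms (q k) /\ cond_witness n0 n1 (q k) M0 (V k)) ->
  (forall k, k <= n -> forall i, ffval (q k 0) i = ffval (q 0 0) i) ->
  (forall k, k <= n -> forall j, V k j < threshold n M0 (length (dom_list (q 0 0))) ->
     exists j', forall i, ffval (q k (S j)) i = ffval (q 0 (S j')) i) ->
  exists r, is_cond n0 n1 H r /\ forall k, k <= n -> Qle (q k) r.
Proof.
  intros hq hw hlow.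
  assert (hq0 : is_cond n0 n1 H (q 0)).
  { destruct (hq 0 ltac:(lia)) as [hd hwit]. split; [exact hd|eauto]. }
  destruct (POS_nonempty n0 n1 hN two_values (q 0) hq0) as [eta0 [he0 hs0]].
  apply (amalgamation n0 n1 hN n q (fun _ => M0) V M0 eta0 (dom_list (q 0 0))).
  - intros k hk. destruct (hq k hk). auto.
  - intros k hk i x hx. rewrite hw in hx by exact hk. apply he0, hx.
  - intros k hk i hi. apply in_dom_list. unfold in_dom in *. rewrite <- (hw k hk i). exact hi.
  - intros k hk j hj. destruct (hlow k hk j hj) as [j' hj'].
    destruct (hs0 j') as [i [x [hx ne]]]. exists i, x. rewrite hj'. auto.
Qed.

Lemma low_sigmas_listable n : exists (wit : point H -> nat * (nat -> nat)) (lowj : point H -> list nat),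
  forall p, is_cond n0 n1 H p ->
    disjoint_doms p /\ cond_witness n0 n1 p (fst (wit p)) (snd (wit p)) /\
    forall j, In j (lowj p) <->
      snd (wit p) j < threshold n (fst (wit p)) (length (dom_list (p 0))).
Proof.
  assert (hwit : forall p : point H, exists w : nat * (nat -> nat), is_cond n0 n1 H p ->
    disjoint_doms p /\ cond_witness n0 n1 p (fst w) (snd w)).
  { intros p. destruct (classic (is_cond n0 n1 H p)) as [[hd [ms [V hw]]]|hp].
    - exists (ms, V). auto.
    - exists (0, fun _ => 0). tauto. }
  destruct (choice _ hwit) as [wit hwit']. exists wit.
  set (low p := threshold n (fst (wit p)) (length (dom_list (p 0)))).
  assert (hlow : forall p : point H, exists l : list nat, is_cond n0 n1 H p ->
    forall j, In j l <-> snd (wit p) j < low p).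
  { intros p. destruct (classic (is_cond n0 n1 H p)) as [hp|hp]; [|exists []; tauto].
    destruct (hwit' p hp) as [_ hw].
    destruct (low_listable n0 n1 0 (fun _ => p) (fun _ => fst (wit p)) (fun _ => snd (wit p))
      (fst (wit p)) (fun _ _ => conj hw (le_n _)) (low p)) as [ll [hll _]].
    exists (map snd ll). intros _ j. rewrite in_map_iff. split.
    - intros [[k j'] [<- ha]]. apply hll in ha. apply ha.
    - intros hj. exists (0, j). split; [reflexivity|]. apply hll. simpl. auto. }
  destruct (choice _ hlow) as [lowj hlowj]. exists lowj.
  intros p hp. split; [apply hwit', hp|split; [apply hwit', hp|apply hlowj, hp]].
Qed.

Lemma Q_sigma_star_linked : (forall i, exists f : H i -> nat, forall a b, f a = f b -> a = b) ->
  sigma_star_linked (is_cond n0 n1 H) Qle.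
Proof.
  intros hcount n.
  destruct (dependent_choice _ hcount) as [code hcode].
  destruct Coding.signature_countable as [cd hcd].
  destruct (low_sigmas_listable n) as [wit [lowj hspec]].
  exists (fun p => cd (fst (wit p), encode code (p 0), map (fun j => encode code (p (S j))) (lowj p))).
  intros q hq hsig.
  assert (hsame : forall k, k <= n -> fst (wit (q k)) = fst (wit (q 0)) /\
    encode code (q k 0) = encode code (q 0 0) /\
    map (fun j => encode code (q k (S j))) (lowj (q k)) =
    map (fun j => encode code (q 0 (S j))) (lowj (q 0))).
  { intros k hk. specialize (hsig k hk). apply hcd in hsig. injection hsig. auto. }
  apply (linked_of_shared_data n q (fst (wit (q 0))) (fun k => snd (wit (q k)))).
  - intros k hk. destruct (hsame k hk) as [<- _]. split; apply hspec, hq, hk.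
  - intros k hk. apply (encode_inj code hcode), hsame, hk.
  - intros k hk j hj. destruct (hsame k hk) as [e1 [e2 e3]].
    assert (hjk : In j (lowj (q k))).
    { apply (hspec (q k) (hq k hk)).
      rewrite e1, <- (length_encode code), e2, length_encode. exact hj. }
    assert (hin : In (encode code (q k (S j))) (map (fun j => encode code (q 0 (S j))) (lowj (q 0)))).
    { rewrite <- e3. apply (in_map (fun j => encode code (q k (S j)))), hjk. }
    apply in_map_iff in hin as [j' [ej _]]. exists j'. apply (encode_inj code hcode). auto.
Qed.

End Linkedness.

(** * Definability *)

Section ClosedSets.
Variables (Z : Type) (agree : nat -> Z -> Z -> Prop).

Definition closed (C : Z -> Prop) : Prop :=
  forall z, ~ C z -> exists n, forall z', agree n z z' -> ~ C z'.

Definition locally_determined (C : Z -> Prop) : Prop :=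
  forall z, exists n, forall z', agree n z z' -> (C z <-> C z').

Lemma closed_of_locally_determined C : locally_determined C -> closed C.
Proof. intros h z hz. destruct (h z) as [n hn]. exists n. intros z' a. rewrite <- (hn z' a). exact hz. Qed.

Lemma closed_and C1 C2 : closed C1 -> closed C2 -> closed (fun z => C1 z /\ C2 z).
Proof.
  intros h1 h2 z hz. destruct (classic (C1 z)) as [c1|c1].
  - destruct (h2 z (fun c2 => hz (conj c1 c2))) as [n hn]. exists n. intros z' a [_ c]. exact (hn z' a c).
  - destruct (h1 z c1) as [n hn]. exists n. intros z' a [c _]. exact (hn z' a c).
Qed.

Lemma closed_forall (I : Type) (C : I -> Z -> Prop) :
  (forall i, closed (C i)) -> closed (fun z => forall i, C i z).
Proof.
  intros h z hz. apply not_all_ex_not in hz as [i hi].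
  destruct (h i z hi) as [n hn]. exists n. intros z' a c. exact (hn z' a (c i)).
Qed.

Lemma closed_iff C C' : (forall z, C z <-> C' z) -> closed C -> closed C'.
Proof.
  intros he hc z hz. rewrite <- he in hz. destruct (hc z hz) as [n hn].
  exists n. intros z' a. rewrite <- he. auto.
Qed.

End ClosedSets.

Arguments closed {Z}. Arguments locally_determined {Z}.

Lemma closed_preimage {Z Z' : Type} (agree : nat -> Z -> Z -> Prop) (agree' : nat -> Z' -> Z' -> Prop)
  (phi : Z' -> Z) C :
  (forall n, exists n', forall z z', agree' n' z z' -> agree n (phi z) (phi z')) ->
  closed agree C -> closed agree' (fun z => C (phi z)).
Proof.
  intros hphi hC z hz. destruct (hC (phi z) hz) as [n hn]. destruct (hphi n) as [n' hn'].
  exists n'. intros z' a. apply hn, hn', a.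
Qed.

Section Spaces.
Variable T : Type.

Definition agree1 (n : nat) (z z' : (nat -> T) * (nat -> nat)) : Prop :=
  forall k, k < n -> fst z' k = fst z k /\ snd z' k = snd z k.

Definition agree2 (n : nat) (z z' : (nat -> T) * (nat -> T) * (nat -> nat)) : Prop :=
  forall k, k < n ->
    fst (fst z') k = fst (fst z) k /\ snd (fst z') k = snd (fst z) k /\ snd z' k = snd z k.

Lemma analytic1_of_closed (A : (nat -> T) -> Prop) C :
  closed agree1 C -> (forall x, A x <-> exists y, C (x, y)) -> analytic1 A.
Proof.
  intros hc he. exists (fun x y => C (x, y)). split; [|exact he].
  intros x y hn. destruct (hc (x, y) hn) as [n hn']. exists n. intros x' y' a.
  apply (hn' (x', y')). intros k hk. destruct (a k hk). auto.
Qed.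

Lemma analytic2_of_closed (A : (nat -> T) -> (nat -> T) -> Prop) C :
  closed agree2 C -> (forall x1 x2, A x1 x2 <-> exists y, C (x1, x2, y)) -> analytic2 A.
Proof.
  intros hc he. exists (fun x1 x2 y => C (x1, x2, y)). split; [|exact he].
  intros x1 x2 y hn. destruct (hc (x1, x2, y) hn) as [n hn']. exists n. intros x1' x2' y' a.
  apply (hn' (x1', x2', y')). intros k hk. destruct (a k hk) as [? [? ?]]. auto.
Qed.

(* A code for a pair of conditions interleaves three Baire-space sequences modulo 3. *)
Definition left_part (z : (nat -> T) * (nat -> T) * (nat -> nat)) : (nat -> T) * (nat -> nat) :=
  (fst (fst z), fun k => snd z (3 * k)).
Definition right_part (z : (nat -> T) * (nat -> T) * (nat -> nat)) : (nat -> T) * (nat -> nat) :=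
  (snd (fst z), fun k => snd z (3 * k + 1)).

Lemma closed_left_part C : closed agree1 C -> closed agree2 (fun z => C (left_part z)).
Proof.
  apply closed_preimage. intros n. exists (3 * n + 3). intros z z' a k hk. simpl.
  destruct (a k ltac:(lia)) as [a1 _]. destruct (a (3 * k) ltac:(lia)) as [_ [_ a3]]. auto.
Qed.

Lemma closed_right_part C : closed agree1 C -> closed agree2 (fun z => C (right_part z)).
Proof.
  apply closed_preimage. intros n. exists (3 * n + 3). intros z z' a k hk. simpl.
  destruct (a k ltac:(lia)) as [_ [a1 _]]. destruct (a (3 * k + 1) ltac:(lia)) as [_ [_ a3]]. auto.
Qed.
End Spaces.

Arguments agree1 {T}. Arguments agree2 {T}. Arguments left_part {T}. Arguments right_part {T}.

Definition interleave3 (y1 y2 y3 : nat -> nat) (t : nat) : nat :=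
  match t mod 3 with 0 => y1 (t / 3) | 1 => y2 (t / 3) | _ => y3 (t / 3) end.

Lemma interleave3_spec y1 y2 y3 k :
  interleave3 y1 y2 y3 (3 * k) = y1 k /\ interleave3 y1 y2 y3 (3 * k + 1) = y2 k /\
  interleave3 y1 y2 y3 (3 * k + 2) = y3 k.
Proof.
  assert (h : forall r, r < 3 -> (3 * k + r) mod 3 = r /\ (3 * k + r) / 3 = k).
  { intros r hr. split.
    - rewrite Nat.mul_comm, Nat.add_comm, Nat.Div0.mod_add. apply Nat.mod_small, hr.
    - rewrite Nat.mul_comm, Nat.div_add_l by lia. rewrite Nat.div_small by exact hr. lia. }
  unfold interleave3. destruct (h 0) as [a b]; [lia|]. destruct (h 1) as [c d]; [lia|].
  destruct (h 2) as [e f]; [lia|]. rewrite Nat.add_0_r in a, b. rewrite a, b, c, d, e, f. auto.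
Qed.

Lemma left_part_interleave3 {T} (x1 x2 : nat -> T) y1 y2 y3 :
  left_part (x1, x2, interleave3 y1 y2 y3) = (x1, y1).
Proof. unfold left_part. f_equal. apply functional_extensionality. intros k. apply interleave3_spec. Qed.

Lemma right_part_interleave3 {T} (x1 x2 : nat -> T) y1 y2 y3 :
  right_part (x1, x2, interleave3 y1 y2 y3) = (x2, y2).
Proof. unfold right_part. f_equal. apply functional_extensionality. intros k. apply interleave3_spec. Qed.

Section Souslin.
Variables (n0 n1 : nat -> nat).
Context {H : nat -> Type}.
Hypothesis hN : in_N n0 n1.
Hypothesis two_values : forall i, exists a b : H i, a <> b.

(* [snd z 0] codes [m*] and [snd z (S j)] codes [V j]. *)
Definition cond_code (z : point H * (nat -> nat)) : Prop :=
  disjoint_doms (fst z) /\ cond_witness n0 n1 (fst z) (snd z 0) (fun j => snd z (S j)).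

Lemma is_cond_iff_code x : is_cond n0 n1 H x <-> exists y, cond_code (x, y).
Proof.
  split.
  - intros [hd [ms [V hw]]]. exists (fun k => match k with 0 => ms | S j => V j end). split; auto.
  - intros [y [hd hw]]. split; [exact hd|eauto].
Qed.

Ltac agree_at a k := let e1 := fresh "e" in let e2 := fresh "e" in
  destruct (a k ltac:(lia)) as [e1 e2]; simpl in e1, e2.

Lemma closed_cond_code : closed agree1 cond_code.
Proof.
  apply closed_and; [|apply closed_and; [|apply closed_and]].
  - unfold disjoint_doms. apply closed_forall; intros a. apply closed_forall; intros b.
    apply closed_forall; intros i. apply closed_of_locally_determined.
    intros [x y]. exists (S (a + b)). intros [x' y'] ag. agree_at ag a. agree_at ag b.
    simpl. rewrite e, e1. tauto.
  - apply closed_forall; intros j. apply closed_of_locally_determined.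
    intros [x y]. exists (S (S j)). intros [x' y'] ag. agree_at ag 0. agree_at ag (S j).
    simpl. rewrite e0, e2. tauto.
  - apply (closed_iff _ _ (fun z => forall m l, snd z 0 <= m -> NoDup l ->
      (forall j, In j l -> snd z (S j) = m) -> length l <= n1 m * 2 ^ snd z 0)).
    { intros z. split; intros h; intros; [apply h|eapply h]; eauto. }
    apply closed_forall; intros m. apply closed_forall; intros l.
    apply closed_of_locally_determined. intros [x y].
    exists (S (S (list_max l))). intros [x' y'] ag. agree_at ag 0. simpl. rewrite e0.
    assert (hl : forall j, In j l -> y' (S j) = y (S j)).
    { intros j hj. apply In_le_list_max in hj. agree_at ag (S j). exact e2. }
    split; intros h h1 h2 h3; apply h; auto; intros j hj; [rewrite <- hl|rewrite hl]; auto.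
  - apply closed_forall; intros j. apply closed_of_locally_determined.
    intros [x y]. exists (S (S j)). intros [x' y'] ag. agree_at ag 0. agree_at ag (S j).
    simpl. rewrite e0, e1, e2. tauto.
Qed.

Lemma analytic_is_cond : analytic1 (is_cond n0 n1 H).
Proof. apply (analytic1_of_closed _ _ _ closed_cond_code). apply is_cond_iff_code. Qed.

(* The third component names, for each [sigma^p_j] not conflicting with [w^q], a [k] with
   [sigma^q_k] contained in it. *)
Definition Qle_code (z : point H * point H * (nat -> nat)) : Prop :=
  cond_code (left_part z) /\ cond_code (right_part z) /\
  sub_pfun (ffval (fst (fst z) 0)) (ffval (snd (fst z) 0)) /\
  forall j, conflicts (ffval (snd (fst z) 0)) (ffval (fst (fst z) (S j))) \/
            sub_pfun (ffval (snd (fst z) (S (snd z (3 * j + 2))))) (ffval (fst (fst z) (S j))).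

Lemma closed_Qle_code : closed agree2 Qle_code.
Proof.
  apply closed_and; [|apply closed_and; [|apply closed_and]].
  - apply (closed_left_part _ cond_code), closed_cond_code.
  - apply (closed_right_part _ cond_code), closed_cond_code.
  - apply closed_of_locally_determined. intros [[x1 x2] y]. exists 1. intros [[x1' x2'] y'] ag.
    destruct (ag 0 ltac:(lia)) as [a1 [a2 _]]. simpl in *. rewrite a1, a2. tauto.
  - apply closed_forall. intros j. apply closed_of_locally_determined. intros [[x1 x2] y].
    exists (3 * j + 3 + S j + S (S (y (3 * j + 2)))). intros [[x1' x2'] y'] ag. simpl.
    destruct (ag 0 ltac:(lia)) as [_ [b0 _]]. destruct (ag (S j) ltac:(lia)) as [a1 _].
    destruct (ag (3 * j + 2) ltac:(lia)) as [_ [_ a3]]. simpl in b0, a1, a3. rewrite a3.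
    destruct (ag (S (y (3 * j + 2))) ltac:(lia)) as [_ [a4 _]]. simpl in a4.
    rewrite a1, a4, b0. tauto.
Qed.

Lemma analytic_Qle : analytic2 (fun p q => is_cond n0 n1 H p /\ is_cond n0 n1 H q /\ Qle p q).
Proof.
  apply (analytic2_of_closed _ _ _ closed_Qle_code). intros x1 x2. split.
  - intros [h1 [h2 hle]].
    destruct (proj1 (is_cond_iff_code x1) h1) as [y1 hy1].
    destruct (proj1 (is_cond_iff_code x2) h2) as [y2 hy2].
    destruct (Qle_refines n0 n1 hN two_values x1 x2 h1 h2 hle) as [hw hs].
    assert (hk : forall j, exists k, conflicts (ffval (x2 0)) (ffval (x1 (S j))) \/
                                     sub_pfun (ffval (x2 (S k))) (ffval (x1 (S j)))).
    { intros j. destruct (hs j) as [h|[k h]]; [exists 0|exists k]; auto. }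
    destruct (choice _ hk) as [kf hkf].
    exists (interleave3 y1 y2 kf). unfold Qle_code.
    rewrite left_part_interleave3, right_part_interleave3.
    split; [exact hy1|split; [exact hy2|split; [exact hw|]]].
    intros j. cbn [fst snd]. rewrite (proj2 (proj2 (interleave3_spec y1 y2 kf j))). apply hkf.
  - intros [y [c1 [c2 [c3 c4]]]].
    assert (h1 : is_cond n0 n1 H x1) by (apply is_cond_iff_code; eauto).
    assert (h2 : is_cond n0 n1 H x2) by (apply is_cond_iff_code; eauto).
    split; [exact h1|split; [exact h2|]]. apply refines_Qle. split; [exact c3|].
    intros j. destruct (c4 j) as [h|h]; [left|right; eexists]; eauto.
Qed.

Definition partial_POS (x1 x2 : point H) (N : nat) : Prop :=
  exists eta, agrees eta (ffval (x1 0)) /\ agrees eta (ffval (x2 0)) /\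
    (forall j, j < N -> avoids eta (ffval (x1 (S j)))) /\
    (forall j, j < N -> avoids eta (ffval (x2 (S j)))).

Lemma partial_POS_local x1 x2 x1' x2' N : (forall k, k <= N -> x1' k = x1 k /\ x2' k = x2 k) ->
  (partial_POS x1 x2 N <-> partial_POS x1' x2' N).
Proof.
  intros h. destruct (h 0 ltac:(lia)) as [e1 e2].
  assert (hj : forall j, j < N -> x1' (S j) = x1 (S j) /\ x2' (S j) = x2 (S j)) by (intros; apply h; lia).
  unfold partial_POS. rewrite e1, e2.
  split; intros [eta [a [b [c d]]]]; exists eta; (split; [auto|split; [auto|split]]);
    intros j hjN; destruct (hj j hjN) as [f1 f2];
    [rewrite f1 | rewrite f2 | rewrite <- f1 | rewrite <- f2]; auto.
Qed.

(* The bound [N = snd z 2] is the finite stage at which incompatibility shows. *)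
Definition incompat_code (z : point H * point H * (nat -> nat)) : Prop :=
  cond_code (left_part z) /\ cond_code (right_part z) /\
  ~ partial_POS (fst (fst z)) (snd (fst z)) (snd z 2).

Lemma closed_incompat_code : closed agree2 incompat_code.
Proof.
  apply closed_and; [|apply closed_and].
  - apply (closed_left_part _ cond_code), closed_cond_code.
  - apply (closed_right_part _ cond_code), closed_cond_code.
  - apply closed_of_locally_determined. intros [[x1 x2] y]. exists (y 2 + 3).
    intros [[x1' x2'] y'] ag. simpl. destruct (ag 2 ltac:(lia)) as [_ [_ a3]]. simpl in a3.
    rewrite a3, (partial_POS_local x1 x2 x1' x2'); [tauto|].
    intros k hk. destruct (ag k ltac:(lia)) as [b1 [b2 _]]. auto.
Qed.

Lemma analytic_incompatible : analytic2 (fun p q => is_cond n0 n1 H p /\ is_cond n0 n1 H q /\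
  ~ compatible (is_cond n0 n1 H) Qle p q).
Proof.
  apply (analytic2_of_closed _ _ _ closed_incompat_code). intros x1 x2. split.
  - intros [h1 [h2 hinc]].
    destruct (proj1 (is_cond_iff_code x1) h1) as [y1 hy1].
    destruct (proj1 (is_cond_iff_code x2) h2) as [y2 hy2].
    destruct (compatible_of_partial_POS n0 n1 hN x1 x2 h1 h2) as [N hNc].
    exists (interleave3 y1 y2 (fun _ => N)). unfold incompat_code.
    rewrite left_part_interleave3, right_part_interleave3. split; [exact hy1|split; [exact hy2|]].
    cbn [fst snd]. rewrite (proj2 (proj2 (interleave3_spec y1 y2 (fun _ => N) 0)) : _ 2 = N).
    intros [eta [a [b [c d]]]]. apply hinc, (hNc eta); auto.
  - intros [y [c1 [c2 c3]]].
    assert (h1 : is_cond n0 n1 H x1) by (apply is_cond_iff_code; eauto).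
    assert (h2 : is_cond n0 n1 H x2) by (apply is_cond_iff_code; eauto).
    split; [exact h1|split; [exact h2|]]. intros hc.
    apply (compatible_iff_POS n0 n1 hN two_values x1 x2 h1 h2) in hc as [eta [[a b] [c d]]].
    apply c3. exists eta. repeat split; [exact a|exact c|intros j _; apply b|intros j _; apply d].
Qed.

End Souslin.

Theorem theorem4p3 (n0 n1 : nat -> nat) (H : nat -> Type)
  (hN : in_N n0 n1)
  (hcount : forall i, exists f : H i -> nat, forall a b, f a = f b -> a = b)
  (htwo : forall i, exists a b : H i, a <> b) :
  sigma_star_linked (is_cond n0 n1 H) (@Qle H) /\
  (forall p0 p1 : point H, is_cond n0 n1 H p0 -> is_cond n0 n1 H p1 ->
     (compatible (is_cond n0 n1 H) (@Qle H) p0 p1 <->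
      exists eta : forall i, H i, POS p0 eta /\ POS p1 eta)) /\
  souslin_ccc (is_cond n0 n1 H) (@Qle H).
Proof.
  assert (hlinked : sigma_star_linked (is_cond n0 n1 H) (@Qle H))
    by exact (Q_sigma_star_linked n0 n1 hN htwo hcount).
  split; [exact hlinked|split].
  - intros p0 p1. exact (compatible_iff_POS n0 n1 hN htwo p0 p1).
  - split.
    + split; [exact (analytic_is_cond n0 n1)|].
      split; [exact (analytic_Qle n0 n1 hN htwo)|exact (analytic_incompatible n0 n1 hN htwo)].
    + apply ccc_of_sigma_star_linked; [|exact hlinked].
      constructor. exact (fun _ => restrict (fun _ => None) []).
Qed.
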